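(* Let $\widetilde\omega:=\exp\bigl(2\int_0^1\ln K(x)\,dx\bigr)$. Then for every integer $n\ge1$ and every $x>0$, $$K(nx)=n^{\frac12nx(nx-1)+\frac1{12}}\;\widetilde\omega^{-\frac12(n^2-1)}\prod_{j=0}^{n-1}K\Bigl(x+\frac jn\Bigr)^n .$$
   Context: $K$ is the Kinkelin function: for $x>0$, $\ln K(x)=\int_0^x\ln\Gamma(t)\,dt+\frac{x(x-1)}{2}-\frac x2\ln 2\pi$; it satisfies $K(1)=1$, $K(x+1)=x^xK(x)$, and $\ln K$ extends continuously to $x=0$ with $K(0)=1$. *)

From Stdlib Require Import Reals.
From Coquelicot Require Import Coquelicot.
Open Scope R_scope.

Definition Gamma (t : R) : R :=
  RInt_gen (fun u => Rpower u (t - 1) * exp (- u)) (at_right 0) (Rbar_locally p_infty).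

Definition lnK (x : R) : R :=
  RInt_gen (fun t => ln (Gamma t)) (at_right 0) (at_point x)
  + x * (x - 1) / 2 - x / 2 * ln (2 * PI).

Definition K (x : R) : R := exp (lnK x).

Definition omega_t : R := exp (2 * RInt lnK 0 1).

Fixpoint prodR (n : nat) (f : nat -> R) : R :=
  match n with
  | O => 1
  | S k => prodR k f * f k
  end.

(* Let Lambda be the closed form of ln K obtained from Raabe's integral
   int_x^(x+1) ln Gamma = ln(2 pi)/2 + x ln x - x, so that Lambda (x + 1) = Lambda x + x ln x.
   Raabe's constant comes from the duplication formula and Gamma(1/2) = sqrt pi, and Gauss's
   multiplication formula for Gamma follows from the Bohr-Mollerup uniqueness of log-convex
   solutions of f(x + 1) = f(x) + ln x.  By the multiplication formula the defect
   F(x) = Lambda(nx) - n sum_j Lambda(x + j/n) - (nx(nx - 1)/2) ln n has constant derivative,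
   and by the functional equation of Lambda it is 1/n-periodic; hence F is constant, and
   integrating it over [0, 1] gives F = (1 - n^2) int_0^1 ln K + (ln n)/12, which is the
   logarithm of the claimed identity. *)

From Stdlib Require Import Reals Lra Lia Classical.
From Coquelicot Require Import Coquelicot.
Open Scope R_scope.

Lemma ball_R_abs (x e y : R) : ball x e y <-> Rabs (y - x) < e.
Proof. reflexivity. Qed.

Ltac ball_bounds H :=
  apply ball_R_abs in H; simpl in H; apply Rabs_def2 in H;
  unfold minus, plus, opp in H; simpl in H.

Lemma ex_derive_continuous_R (f : R -> R) (x : R) : ex_derive f x -> continuous f x.
Proof. apply (ex_derive_continuous (K:=R_AbsRing) (V:=R_NormedModule)). Qed.

Lemma ex_RInt_continuous_R (f : R -> R) a b :
  (forall z, Rmin a b <= z <= Rmax a b -> continuous f z) -> ex_RInt f a b.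
Proof. apply (ex_RInt_continuous (V:=R_CompleteNormedModule)). Qed.

Lemma is_derive_0_eq (f : R -> R) a b :
  (forall x, Rmin a b <= x <= Rmax a b -> is_derive f x 0) -> f b = f a.
Proof.
  intros Hd.
  assert (H1 : is_RInt (fun _ : R => 0) a b (minus (f b) (f a))).
  { apply (is_RInt_derive (V:=R_CompleteNormedModule)); [exact Hd | intros; apply continuous_const]. }
  pose proof (is_RInt_const (V:=R_NormedModule) a b 0) as H2.
  apply (is_RInt_unique (V:=R_CompleteNormedModule)) in H1, H2. rewrite H1 in H2.
  unfold minus, plus, opp, scal in H2; simpl in H2; unfold mult in H2; simpl in H2. lra.
Qed.

Lemma RInt_derive_interior (f F : R -> R) (a b d : R) :
  a <= b -> 0 < d ->
  (forall x, a - d < x < b + d -> continuous f x) ->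
  continuous F a -> continuous F b ->
  (forall x, a < x < b -> is_derive F x (f x)) ->
  RInt f a b = F b - F a.
Proof.
  (* mean value theorem for s |-> RInt f a s - F s, whose derivative vanishes inside (a, b) *)
  intros Hab Hd Hf HFa HFb HF.
  assert (Hloc : forall x, a - d < x < b + d -> locally x (fun z => is_RInt f a z (RInt f a z))).
  { intros x Hx.
    assert (Hp : 0 < Rmin (x - (a - d)) (b + d - x)) by (apply Rmin_glb_lt; lra).
    exists (mkposreal _ Hp). intros z Hz. ball_bounds Hz.
    pose proof (Rmin_l (x - (a - d)) (b + d - x)). pose proof (Rmin_r (x - (a - d)) (b + d - x)).
    apply (RInt_correct (V:=R_CompleteNormedModule)), ex_RInt_continuous_R.
    intros w Hw. apply Hf. split.
    - apply Rlt_le_trans with (Rmin a z); [apply Rmin_glb_lt|]; lra.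
    - apply Rle_lt_trans with (Rmax a z); [|apply Rmax_lub_lt]; lra. }
  destruct (MVT_gen (fun s => RInt f a s - F s) a b (fun _ => 0)) as [c [_ Hc]].
  - intros x Hx. rewrite Rmin_left, Rmax_right in Hx by lra.
    replace 0 with (f x - f x) by ring.
    apply (is_derive_minus (fun s => RInt f a s) F); [|apply HF, Hx].
    apply (is_derive_RInt f (fun s => RInt f a s) a x); [apply Hloc | apply Hf]; lra.
  - intros x Hx. rewrite Rmin_left, Rmax_right in Hx by lra.
    apply continuity_pt_filterlim.
    apply (continuous_minus (fun s => RInt f a s) F x); [apply (continuous_RInt_1 f a x), Hloc; lra|].
    destruct (Req_dec x a) as [-> | Hxa]; [exact HFa|].
    destruct (Req_dec x b) as [-> | Hxb]; [exact HFb|].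
    apply ex_derive_continuous_R. eexists. apply HF. lra.
  - rewrite RInt_point, Rmult_0_l in Hc. unfold zero in Hc; simpl in Hc. lra.
Qed.

Lemma is_RInt_affine (f : R -> R) u v a b : u <> 0 -> ex_RInt f (u * a + v) (u * b + v) ->
  is_RInt (fun y => f (u * y + v)) a b (/ u * RInt f (u * a + v) (u * b + v)).
Proof.
  intros Hu Hex.
  apply (is_RInt_ext (fun y => scal (/ u) (scal u (f (u * y + v))))).
  - intros y _. unfold scal; simpl; unfold mult; simpl. field. exact Hu.
  - apply (is_RInt_scal (V:=R_NormedModule)), (is_RInt_comp_lin (V:=R_NormedModule)).
    apply (RInt_correct (V:=R_CompleteNormedModule)), Hex.
Qed.

Lemma RInt_shift (f : R -> R) c a b : ex_RInt f (a + c) (b + c) ->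
  RInt (fun t => f (t + c)) a b = RInt f (a + c) (b + c).
Proof.
  intros Hex. apply is_RInt_unique.
  replace (RInt f (a + c) (b + c)) with (/ 1 * RInt f (1 * a + c) (1 * b + c))
    by (rewrite Rinv_1, !Rmult_1_l; reflexivity).
  apply (is_RInt_ext (fun t => f (1 * t + c))); [intros; rewrite Rmult_1_l; reflexivity|].
  apply is_RInt_affine; [lra | rewrite !Rmult_1_l; exact Hex].
Qed.

Lemma between_pos a b x : 0 < a -> 0 < b -> Rmin a b <= x <= Rmax a b -> 0 < x.
Proof. intros Ha Hb Hx. apply Rlt_le_trans with (Rmin a b); [apply Rmin_glb_lt|]; lra. Qed.

Lemma exp_le_compat x y : x <= y -> exp x <= exp y.
Proof. intros [H | ->]; [left; apply exp_increasing; exact H | right; reflexivity]. Qed.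

Lemma exp_opp_le_1 u : 0 <= u -> exp (- u) <= 1.
Proof. intros H. rewrite <- exp_0. apply exp_le_compat. lra. Qed.

Lemma ln_le_minus_1 x : 0 < x -> ln x <= x - 1.
Proof. intros Hx. pose proof (exp_ineq1_le (ln x)) as H. rewrite exp_ln in H by lra. lra. Qed.

Lemma ln_of_nonpos x : x <= 0 -> ln x = 0.
Proof. intros H. unfold ln. case (Rlt_dec 0 x); intros; [exfalso; lra | reflexivity]. Qed.

Lemma ln_div_1_le x y : 0 < x -> 0 < y -> ln x - ln y <= x / y - 1.
Proof.
  intros Hx Hy. pose proof (ln_le_minus_1 (x / y) ltac:(apply Rdiv_lt_0_compat; lra)) as H.
  unfold Rdiv in H. rewrite ln_mult, ln_Rinv in H by (try apply Rinv_0_lt_compat; lra). exact H.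
Qed.

Lemma exp_convex l X Y : 0 <= l <= 1 ->
  exp (l * X + (1 - l) * Y) <= l * exp X + (1 - l) * exp Y.
Proof.
  intros Hl. set (w := l * exp X + (1 - l) * exp Y).
  pose proof (exp_pos X). pose proof (exp_pos Y).
  assert (Hw : 0 < w).
  { unfold w. destruct (Rle_lt_dec l 0); [replace l with 0 by lra; lra | nra]. }
  (* tangent line of exp at ln w, averaged over X and Y *)
  pose proof (exp_ineq1_le (X - ln w)) as HX. pose proof (exp_ineq1_le (Y - ln w)) as HY.
  assert (EX : exp X = w * exp (X - ln w)).
  { unfold Rminus. rewrite exp_plus, exp_Ropp, exp_ln by lra. field. lra. }
  assert (EY : exp Y = w * exp (Y - ln w)).
  { unfold Rminus. rewrite exp_plus, exp_Ropp, exp_ln by lra. field. lra. }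
  assert (Hle : l * X + (1 - l) * Y <= ln w).
  { assert (Hsum : 1 = l * exp (X - ln w) + (1 - l) * exp (Y - ln w)).
    { apply Rmult_eq_reg_l with w; [|lra]. unfold w at 1. rewrite EX, EY. ring. }
    nra. }
  rewrite <- (exp_ln w) by exact Hw. apply exp_le_compat. exact Hle.
Qed.

Lemma at_right_gt (c : R) : at_right c (fun a => c < a).
Proof. exists (mkposreal 1 Rlt_0_1). intros y _ H. exact H. Qed.

Lemma at_right_lt (c d : R) : c < d -> at_right c (fun a => a < d).
Proof.
  intros H. exists (mkposreal (d - c) ltac:(lra)). intros y Hy _. ball_bounds Hy. lra.
Qed.

Lemma pinfty_gt (c : R) : Rbar_locally p_infty (fun b => c < b).
Proof. exists c. intros; assumption. Qed.

Lemma continuous_at_right (f : R -> R) c :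
  continuous f c -> filterlim f (at_right c) (locally (f c)).
Proof.
  intros Hc P HP. destruct (Hc P HP) as [e He]. exists e. intros y Hy _. apply He. exact Hy.
Qed.

Section RealLimits.
Context {T : Type} {F : (T -> Prop) -> Prop} {FF : Filter F}.

Lemma filterlim_R_plus (f g : T -> R) lf lg :
  filterlim f F (locally lf) -> filterlim g F (locally lg) ->
  filterlim (fun x => f x + g x) F (locally (lf + lg)).
Proof.
  intros Hf Hg. apply (filterlim_comp_2 (G:=locally lf) (H:=locally lg) f g plus Hf Hg).
  apply (filterlim_plus (V:=R_NormedModule)).
Qed.

Lemma filterlim_R_scal (f : T -> R) c lf :
  filterlim f F (locally lf) -> filterlim (fun x => c * f x) F (locally (c * lf)).
Proof.
  intros Hf. apply (filterlim_comp _ _ _ f (fun y => c * y) F (locally lf) _ Hf).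
  apply (filterlim_scal_r (K:=R_AbsRing) (V:=R_NormedModule) c lf).
Qed.

Lemma filterlim_R_opp (f : T -> R) lf :
  filterlim f F (locally lf) -> filterlim (fun x => - f x) F (locally (- lf)).
Proof.
  intros Hf. apply (filterlim_ext (fun x => -1 * f x)); [intros; ring|].
  replace (- lf) with (-1 * lf) by ring. apply filterlim_R_scal; exact Hf.
Qed.

Lemma filterlim_R_minus (f g : T -> R) lf lg :
  filterlim f F (locally lf) -> filterlim g F (locally lg) ->
  filterlim (fun x => f x - g x) F (locally (lf - lg)).
Proof. intros Hf Hg. apply filterlim_R_plus; [exact Hf | apply filterlim_R_opp; exact Hg]. Qed.

End RealLimits.

Lemma filterlim_prod_fst {Fa Fb : (R -> Prop) -> Prop} {FFb : Filter Fb} (A : R -> R) la :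
  filterlim A Fa (locally la) ->
  filterlim (fun ab : R * R => A (fst ab)) (filter_prod Fa Fb) (locally la).
Proof. intros H. apply (filterlim_comp _ _ _ fst A _ Fa); [apply filterlim_fst | exact H]. Qed.

Lemma filterlim_prod_snd {Fa Fb : (R -> Prop) -> Prop} {FFa : Filter Fa} (B : R -> R) lb :
  filterlim B Fb (locally lb) ->
  filterlim (fun ab : R * R => B (snd ab)) (filter_prod Fa Fb) (locally lb).
Proof. intros H. apply (filterlim_comp _ _ _ snd B _ Fb); [apply filterlim_snd | exact H]. Qed.

Lemma monotone_bounded_lim_at_right0 (U : R -> R) (M : R) :
  (forall a a', 0 < a -> a <= a' -> a' <= 1 -> U a' <= U a) ->
  (forall a, 0 < a <= 1 -> U a <= M) ->
  exists l, filterlim U (at_right 0) (locally l) /\ (forall a, 0 < a <= 1 -> U a <= l).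
Proof.
  intros Hmono Hb.
  set (E := fun y => exists a, 0 < a <= 1 /\ y = U a).
  assert (HE : bound E) by (exists M; intros y [a [Ha ->]]; apply Hb; exact Ha).
  assert (HE1 : exists y, E y) by (exists (U 1), 1; split; [lra | reflexivity]).
  destruct (completeness E HE HE1) as [m [Hub Hlub]].
  exists m. split.
  - apply filterlim_locally. intros eps.
    destruct (classic (exists a0, 0 < a0 <= 1 /\ m - eps < U a0)) as [[a0 [Ha0 Hlt]] | Hn].
    + exists (mkposreal a0 (proj1 Ha0)). intros y Hy Hy0. ball_bounds Hy. apply ball_R_abs.
      assert (U y <= m) by (apply Hub; exists y; split; [split; lra | reflexivity]).
      assert (U a0 <= U y) by (apply Hmono; lra).
      apply Rabs_def1; lra.
    + exfalso. assert (Hup : is_upper_bound E (m - eps)).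
      { intros y [a [Ha ->]]. apply Rnot_lt_le. intros Hlt. apply Hn. exists a. split; assumption. }
      specialize (Hlub _ Hup). destruct eps; simpl in *; lra.
  - intros a Ha. apply Hub. exists a. split; [exact Ha | reflexivity].
Qed.

Lemma monotone_bounded_lim_pinfty (V : R -> R) (M : R) :
  (forall b b', 1 <= b -> b <= b' -> V b <= V b') ->
  (forall b, 1 <= b -> V b <= M) ->
  exists l, filterlim V (Rbar_locally p_infty) (locally l) /\ (forall b, 1 <= b -> V b <= l).
Proof.
  intros Hmono Hb.
  set (E := fun y => exists b, 1 <= b /\ y = V b).
  assert (HE : bound E) by (exists M; intros y [b [Hb' ->]]; apply Hb; exact Hb').
  assert (HE1 : exists y, E y) by (exists (V 1), 1; split; [lra | reflexivity]).
  destruct (completeness E HE HE1) as [m [Hub Hlub]].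
  exists m. split.
  - apply filterlim_locally. intros eps.
    destruct (classic (exists b0, 1 <= b0 /\ m - eps < V b0)) as [[b0 [Hb0 Hlt]] | Hn].
    + exists b0. intros y Hy. apply ball_R_abs.
      assert (V y <= m) by (apply Hub; exists y; split; [lra | reflexivity]).
      assert (V b0 <= V y) by (apply Hmono; lra).
      apply Rabs_def1; lra.
    + exfalso. assert (Hup : is_upper_bound E (m - eps)).
      { intros y [b [Hb' ->]]. apply Rnot_lt_le. intros Hlt. apply Hn. exists b. split; assumption. }
      specialize (Hlub _ Hup). destruct eps; simpl in *; lra.
  - intros b Hb'. apply Hub. exists b. split; [exact Hb' | reflexivity].
Qed.

Lemma is_RInt_gen_of_RInt {Fa Fb : (R -> Prop) -> Prop} {FFa : Filter Fa} {FFb : Filter Fb}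
  (f : R -> R) (l : R) :
  filter_prod Fa Fb (fun ab => ex_RInt f (fst ab) (snd ab)) ->
  filterlim (fun ab => RInt f (fst ab) (snd ab)) (filter_prod Fa Fb) (locally l) ->
  is_RInt_gen f Fa Fb l.
Proof.
  intros Hex Hlim P HP. specialize (Hlim P HP). unfold filtermapi.
  apply (filter_imp (fun ab => ex_RInt f (fst ab) (snd ab) /\ P (RInt f (fst ab) (snd ab)))).
  - intros ab [H1 H2]. exists (RInt f (fst ab) (snd ab)). split; [exact (RInt_correct _ _ _ H1) | exact H2].
  - apply filter_and; assumption.
Qed.

Lemma is_RInt_gen_RInt_lim {Fa Fb : (R -> Prop) -> Prop} {FFa : Filter Fa} {FFb : Filter Fb}
  (f : R -> R) (l : R) :
  is_RInt_gen f Fa Fb l ->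
  filterlim (fun ab => RInt f (fst ab) (snd ab)) (filter_prod Fa Fb) (locally l).
Proof.
  intros H P HP. specialize (H P HP). unfold filtermapi in H. unfold filtermap.
  revert H. apply filter_imp.
  intros ab [y [Hy Py]]. rewrite (is_RInt_unique _ _ _ _ Hy). exact Py.
Qed.

Definition at_0_pinfty := filter_prod (at_right 0) (Rbar_locally p_infty).

Lemma at_0_pinfty_pos : at_0_pinfty (fun ab => 0 < fst ab /\ 0 < snd ab).
Proof.
  apply (Filter_prod _ _ _ (fun a => 0 < a) (fun b => 0 < b));
    [apply at_right_gt | apply pinfty_gt | intros; simpl; auto].
Qed.

Lemma is_RInt_gen_0_pinfty (f : R -> R) (Phi : R -> R -> R) l :
  (forall a b, 0 < a -> 0 < b -> ex_RInt f a b /\ RInt f a b = Phi a b) ->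
  filterlim (fun ab => Phi (fst ab) (snd ab)) at_0_pinfty (locally l) ->
  is_RInt_gen f (at_right 0) (Rbar_locally p_infty) l.
Proof.
  intros HPhi Hlim. apply is_RInt_gen_of_RInt.
  - generalize at_0_pinfty_pos. apply filter_imp. intros ab [Ha Hb]. apply HPhi; assumption.
  - eapply filterlim_ext_loc; [|exact Hlim].
    generalize at_0_pinfty_pos. apply filter_imp. intros ab [Ha Hb]. symmetry. apply HPhi; assumption.
Qed.

Lemma is_RInt_gen_split1 (f : R -> R) (lu lv : R) :
  (forall a b, 0 < a -> 0 < b -> ex_RInt f a b) ->
  filterlim (fun a => RInt f a 1) (at_right 0) (locally lu) ->
  filterlim (fun b => RInt f 1 b) (Rbar_locally p_infty) (locally lv) ->
  is_RInt_gen f (at_right 0) (Rbar_locally p_infty) (lu + lv).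
Proof.
  intros Hex HU HV.
  apply (is_RInt_gen_0_pinfty f (fun a b => RInt f a 1 + RInt f 1 b)).
  - intros a b Ha Hb. split; [apply Hex; assumption|].
    symmetry. apply (RInt_Chasles (V:=R_CompleteNormedModule)); apply Hex; lra.
  - apply filterlim_R_plus.
    + apply (filterlim_prod_fst (fun a => RInt f a 1)). exact HU.
    + apply (filterlim_prod_snd (fun b => RInt f 1 b)). exact HV.
Qed.

Definition convex_pos (phi : R -> R) : Prop :=
  forall x y l, 0 < x -> 0 < y -> 0 <= l <= 1 ->
    phi (l * x + (1 - l) * y) <= l * phi x + (1 - l) * phi y.

Lemma convex_pos_chord phi a b c : convex_pos phi -> 0 < a -> a < b -> b < c ->
  (c - a) * phi b <= (c - b) * phi a + (b - a) * phi c.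
Proof.
  intros Hc Ha Hab Hbc.
  set (l := (c - b) / (c - a)).
  assert (Hl : 0 <= l <= 1).
  { unfold l. split.
    - apply Rmult_le_pos; [lra | left; apply Rinv_0_lt_compat; lra].
    - apply Rmult_le_reg_r with (c - a); [lra|]. unfold Rdiv. rewrite Rmult_assoc, Rinv_l by lra. lra. }
  pose proof (Hc a c l Ha ltac:(lra) Hl) as H.
  replace (l * a + (1 - l) * c) with b in H by (unfold l; field; lra).
  apply Rmult_le_compat_l with (r := c - a) in H; [|lra].
  replace ((c - a) * (l * phi a + (1 - l) * phi c)) with ((c - b) * phi a + (b - a) * phi c) in H
    by (unfold l; field; lra).
  exact H.
Qed.

Lemma convex_pos_lipschitz phi x y : convex_pos phi -> 0 < x -> Rabs (y - x) < x / 2 ->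
  x / 2 * Rabs (phi y - phi x)
  <= Rabs (y - x) * (Rabs (phi (x + x / 2) - phi x) + Rabs (phi x - phi (x - x / 2))).
Proof.
  intros Hc Hx Hy. set (h := x / 2). fold h in Hy. apply Rabs_def2 in Hy.
  assert (Hh : 0 < h) by (unfold h; lra).
  pose proof (Rle_abs (phi (x + h) - phi x)). pose proof (Rle_abs (- (phi (x + h) - phi x))).
  pose proof (Rle_abs (phi x - phi (x - h))). pose proof (Rle_abs (- (phi x - phi (x - h)))).
  rewrite Rabs_Ropp in *.
  rewrite <- (Rabs_pos_eq h) at 1 by lra. rewrite <- Rabs_mult.
  destruct (Rtotal_order y x) as [Hlt | [-> | Hgt]].
  - pose proof (convex_pos_chord phi (x - h) y x Hc ltac:(unfold h in *; lra) ltac:(lra) Hlt).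
    pose proof (convex_pos_chord phi y x (x + h) Hc ltac:(unfold h in *; lra) Hlt ltac:(lra)).
    rewrite (Rabs_left (y - x)) by lra.
    pose proof (Rabs_pos (phi (x + h) - phi x)). pose proof (Rabs_pos (phi x - phi (x - h))).
    apply Rabs_le. split; nra.
  - rewrite !Rminus_diag, Rmult_0_r, Rabs_R0, Rmult_0_l. lra.
  - pose proof (convex_pos_chord phi x y (x + h) Hc Hx Hgt ltac:(lra)).
    pose proof (convex_pos_chord phi (x - h) x y Hc ltac:(unfold h in *; lra) ltac:(lra) Hgt).
    rewrite (Rabs_right (y - x)) by lra.
    pose proof (Rabs_pos (phi (x + h) - phi x)). pose proof (Rabs_pos (phi x - phi (x - h))).
    apply Rabs_le. split; nra.
Qed.

Lemma convex_pos_continuous phi x : convex_pos phi -> 0 < x -> continuous phi x.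
Proof.
  intros Hc Hx. set (h := x / 2).
  set (M := Rabs (phi (x + h) - phi x) + Rabs (phi x - phi (x - h))).
  assert (HM : 0 <= M)
    by (unfold M; pose proof (Rabs_pos (phi (x + h) - phi x)); pose proof (Rabs_pos (phi x - phi (x - h))); lra).
  apply filterlim_locally. intros eps.
  assert (Hd : 0 < Rmin h (eps * h / (M + 1))).
  { apply Rmin_glb_lt; [unfold h; lra|]. apply Rdiv_lt_0_compat; [destruct eps; simpl; unfold h; nra | lra]. }
  exists (mkposreal _ Hd). intros y Hy. apply ball_R_abs. apply ball_R_abs in Hy. simpl in Hy.
  assert (H1 : Rabs (y - x) < h) by (eapply Rlt_le_trans; [exact Hy | apply Rmin_l]).
  assert (H2 : Rabs (y - x) < eps * h / (M + 1)) by (eapply Rlt_le_trans; [exact Hy | apply Rmin_r]).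
  pose proof (convex_pos_lipschitz phi x y Hc Hx H1) as Hb. fold h M in Hb.
  assert (H3 : Rabs (y - x) * (M + 1) < eps * h).
  { apply Rmult_lt_compat_r with (r := M + 1) in H2; [|lra].
    unfold Rdiv in H2. rewrite Rmult_assoc, Rinv_l, Rmult_1_r in H2 by lra. exact H2. }
  pose proof (Rabs_pos (y - x)). pose proof (Rabs_pos (phi y - phi x)).
  destruct eps as [e He]. simpl in *. unfold h in *. nra.
Qed.

Lemma convex_pos_increment_bounds (f : R -> R) y x : convex_pos f ->
  (forall x, 0 < x -> f (x + 1) = f x + ln x) -> 2 <= y -> 0 < x < 1 ->
  x * ln (y - 1) <= f (y + x) - f y <= x * ln y.
Proof.
  intros Hc Hf Hy Hx.
  pose proof (convex_pos_chord f (y - 1) y (y + x) Hc ltac:(lra) ltac:(lra) ltac:(lra)) as S1.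
  pose proof (convex_pos_chord f y (y + x) (y + 1) Hc ltac:(lra) ltac:(lra) ltac:(lra)) as S2.
  pose proof (Hf (y - 1) ltac:(lra)) as E1. replace (y - 1 + 1) with y in E1 by ring.
  rewrite (Hf y) in S2 by lra. rewrite E1 in S1.
  split; nra.
Qed.

Fixpoint sumR (n : nat) (f : nat -> R) : R :=
  match n with
  | O => 0
  | S k => sumR k f + f k
  end.

Lemma sumR_ext n f h : (forall j, (j < n)%nat -> f j = h j) -> sumR n f = sumR n h.
Proof.
  induction n as [|n IH]; intros H; simpl; [reflexivity|].
  f_equal; [apply IH; intros; apply H | apply H]; lia.
Qed.

Lemma sumR_plus n f h : sumR n (fun j => f j + h j) = sumR n f + sumR n h.
Proof. induction n as [|n IH]; simpl; [ring | rewrite IH; ring]. Qed.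

Lemma sumR_scal n c f : sumR n (fun j => c * f j) = c * sumR n f.
Proof. induction n as [|n IH]; simpl; [ring | rewrite IH; ring]. Qed.

Lemma sumR_const n c : sumR n (fun _ => c) = INR n * c.
Proof. induction n as [|n IH]; simpl sumR; [simpl; ring | rewrite IH, S_INR; ring]. Qed.

Lemma sumR_le n f h : (forall j, (j < n)%nat -> f j <= h j) -> sumR n f <= sumR n h.
Proof.
  induction n as [|n IH]; intros H; simpl; [lra|].
  apply Rplus_le_compat; [apply IH; intros; apply H | apply H]; lia.
Qed.

Lemma sumR_shift n (G : nat -> R) : sumR n (fun j => G (S j)) = sumR n G + G n - G O.
Proof. induction n as [|n IH]; simpl; [ring | rewrite IH; ring]. Qed.

Lemma sumR_squares n : sumR n (fun j => INR j * INR j) = (INR n - 1) * INR n * (2 * INR n - 1) / 6.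
Proof. induction n as [|n IH]; simpl sumR; [simpl; field | rewrite IH, S_INR; field]. Qed.

Lemma prodR_ext n f h : (forall j, (j < n)%nat -> f j = h j) -> prodR n f = prodR n h.
Proof.
  induction n as [|n IH]; intros H; simpl; [reflexivity|].
  f_equal; [apply IH; intros; apply H | apply H]; lia.
Qed.

Lemma prodR_exp n f : prodR n (fun j => exp (f j)) = exp (sumR n f).
Proof.
  induction n as [|n IH]; simpl; [rewrite exp_0; reflexivity | rewrite IH, exp_plus; reflexivity].
Qed.

(** * The Gamma function *)

Definition gamma_integrand (t u : R) : R := Rpower u (t - 1) * exp (- u).

Lemma gamma_integrand_exp t u : 0 < u -> gamma_integrand t u = exp ((t - 1) * ln u - u).
Proof. intros Hu. unfold gamma_integrand, Rpower. rewrite <- exp_plus. f_equal; ring. Qed.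

Lemma gamma_integrand_pos t u : 0 < gamma_integrand t u.
Proof. unfold gamma_integrand, Rpower. apply Rmult_lt_0_compat; apply exp_pos. Qed.

Lemma gamma_integrand_continuous t u : 0 < u -> continuous (gamma_integrand t) u.
Proof. intros Hu. apply ex_derive_continuous_R. unfold gamma_integrand, Rpower. auto_derive. lra. Qed.

Lemma ex_RInt_gamma_integrand t a b : 0 < a -> 0 < b -> ex_RInt (gamma_integrand t) a b.
Proof.
  intros Ha Hb. apply ex_RInt_continuous_R. intros z Hz.
  apply gamma_integrand_continuous. exact (between_pos a b z Ha Hb Hz).
Qed.

Lemma RInt_gamma_integrand_ge0 t a b : 0 < a <= b -> 0 <= RInt (gamma_integrand t) a b.
Proof.
  intros Hab. apply RInt_ge_0; [lra | apply ex_RInt_gamma_integrand; lra |].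
  intros; left; apply gamma_integrand_pos.
Qed.

Lemma ln_le_linear s u : 1 <= u -> s * ln u <= u / 2 + Rabs s * ln (2 * Rabs s + 2).
Proof.
  intros Hu. set (m := 2 * Rabs s + 2).
  assert (Hs : 0 <= Rabs s) by apply Rabs_pos.
  assert (Hm : 0 < m) by (unfold m; lra).
  assert (Hl : 0 <= ln u) by (rewrite <- ln_1; apply ln_le; lra).
  assert (H1 : ln u <= u / m + ln m) by (pose proof (ln_div_1_le u m ltac:(lra) Hm); lra).
  assert (H2 : s * ln u <= Rabs s * ln u) by (apply Rmult_le_compat_r; [exact Hl | apply Rle_abs]).
  assert (H3 : Rabs s * ln u <= Rabs s * (u / m + ln m)) by (apply Rmult_le_compat_l; lra).
  assert (H4 : Rabs s * (u / m) <= u / 2).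
  { replace (Rabs s * (u / m)) with (u * (Rabs s / m)) by (field; lra).
    assert (Rabs s / m <= 1 / 2).
    { apply Rmult_le_reg_r with m; [lra|]. unfold Rdiv. rewrite Rmult_assoc, Rinv_l by lra.
      unfold m; lra. }
    nra. }
  lra.
Qed.

Lemma RInt_Rpower t a b : 0 < t -> 0 < a -> 0 < b ->
  RInt (fun u => Rpower u (t - 1)) a b = (exp (t * ln b) - exp (t * ln a)) / t.
Proof.
  intros Ht Ha Hb. apply is_RInt_unique.
  replace ((exp (t * ln b) - exp (t * ln a)) / t)
    with (minus (exp (t * ln b) / t) (exp (t * ln a) / t))
    by (unfold minus, plus, opp; simpl; field; lra).
  apply (is_RInt_derive (fun u => exp (t * ln u) / t)).
  - intros x Hx. pose proof (between_pos a b x Ha Hb Hx). auto_derive; [lra|].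
    unfold Rpower. replace ((t - 1) * ln x) with (t * ln x + - ln x) by ring.
    rewrite exp_plus, exp_Ropp, exp_ln by lra. field. lra.
  - intros x Hx. pose proof (between_pos a b x Ha Hb Hx).
    apply ex_derive_continuous_R. unfold Rpower. auto_derive. lra.
Qed.

Lemma RInt_gamma_integrand_01_le t a : 0 < t -> 0 < a <= 1 ->
  RInt (gamma_integrand t) a 1 <= 1 / t.
Proof.
  intros Ht Ha.
  apply Rle_trans with (RInt (fun u => Rpower u (t - 1)) a 1).
  - apply RInt_le; [lra | apply ex_RInt_gamma_integrand; lra | |].
    + apply ex_RInt_continuous_R. intros z Hz. pose proof (between_pos a 1 z ltac:(lra) ltac:(lra) Hz).
      apply ex_derive_continuous_R. unfold Rpower. auto_derive. lra.
    + intros x Hx. unfold gamma_integrand. rewrite <- (Rmult_1_r (Rpower x (t - 1))) at 2.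
      apply Rmult_le_compat_l; [unfold Rpower; left; apply exp_pos | apply exp_opp_le_1; lra].
  - rewrite RInt_Rpower by lra. rewrite ln_1, Rmult_0_r, exp_0.
    unfold Rdiv. apply Rmult_le_compat_r; [left; apply Rinv_0_lt_compat; lra|].
    pose proof (exp_pos (t * ln a)). lra.
Qed.

Lemma RInt_gamma_integrand_1b_le t b : 1 <= b ->
  RInt (gamma_integrand t) 1 b <= 2 * exp (Rabs (t - 1) * ln (2 * Rabs (t - 1) + 2)).
Proof.
  intros Hb. set (C := exp (Rabs (t - 1) * ln (2 * Rabs (t - 1) + 2))).
  assert (HC : 0 < C) by apply exp_pos.
  apply Rle_trans with (RInt (fun u => C * exp (- (u / 2))) 1 b).
  - apply RInt_le; [lra | apply ex_RInt_gamma_integrand; lra | |].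
    + apply ex_RInt_continuous_R. intros z _. apply ex_derive_continuous_R. auto_derive. auto.
    + intros u Hu. rewrite gamma_integrand_exp by lra. unfold C. rewrite <- exp_plus.
      apply exp_le_compat. pose proof (ln_le_linear (t - 1) u ltac:(lra)). lra.
  - rewrite (is_RInt_unique _ _ _ (minus (-2 * C * exp (- (b / 2))) (-2 * C * exp (- (1 / 2))))).
    + unfold minus, plus, opp; simpl. pose proof (exp_pos (- (b / 2))).
      pose proof (exp_opp_le_1 (1 / 2) ltac:(lra)). nra.
    + apply (is_RInt_derive (fun u => -2 * C * exp (- (u / 2)))).
      * intros x _. auto_derive; [auto|]. unfold Rdiv. lra.
      * intros x _. apply ex_derive_continuous_R. auto_derive. auto.
Qed.

Lemma ex_Gamma_integral t : 0 < t ->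
  exists l, is_RInt_gen (gamma_integrand t) (at_right 0) (Rbar_locally p_infty) l /\ 0 < l.
Proof.
  intros Ht.
  destruct (monotone_bounded_lim_at_right0 (fun a => RInt (gamma_integrand t) a 1) (1 / t))
    as [lu [HU HUb]].
  { intros a a' Ha Haa' Ha'.
    rewrite <- (RInt_Chasles (V:=R_CompleteNormedModule) _ a a' 1)
      by (apply ex_RInt_gamma_integrand; lra).
    pose proof (RInt_gamma_integrand_ge0 t a a' ltac:(lra)). unfold plus; simpl. lra. }
  { intros a Ha. apply RInt_gamma_integrand_01_le; lra. }
  destruct (monotone_bounded_lim_pinfty (fun b => RInt (gamma_integrand t) 1 b)
              (2 * exp (Rabs (t - 1) * ln (2 * Rabs (t - 1) + 2))))
    as [lv [HV HVb]]; [| apply RInt_gamma_integrand_1b_le |].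
  { intros b b' Hb Hbb'.
    rewrite <- (RInt_Chasles (V:=R_CompleteNormedModule) _ 1 b b')
      by (apply ex_RInt_gamma_integrand; lra).
    pose proof (RInt_gamma_integrand_ge0 t b b' ltac:(lra)). unfold plus; simpl. lra. }
  exists (lu + lv). split.
  - apply is_RInt_gen_split1; [intros; apply ex_RInt_gamma_integrand; auto | exact HU | exact HV].
  - assert (H1 : RInt (gamma_integrand t) 1 1 <= lu) by (apply HUb; lra).
    rewrite RInt_point in H1. unfold zero in H1; simpl in H1.
    assert (H2 : RInt (gamma_integrand t) 1 2 <= lv) by (apply HVb; lra).
    assert (H3 : 0 < RInt (gamma_integrand t) 1 2).
    { apply RInt_gt_0; [lra | intros; apply gamma_integrand_pos |].
      intros x Hx; apply gamma_integrand_continuous; lra. }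
    lra.
Qed.

Lemma is_RInt_gen_Gamma t : 0 < t ->
  is_RInt_gen (gamma_integrand t) (at_right 0) (Rbar_locally p_infty) (Gamma t).
Proof.
  intros Ht. destruct (ex_Gamma_integral t Ht) as [l [Hl _]].
  unfold Gamma. fold (gamma_integrand t). rewrite (is_RInt_gen_unique _ _ Hl). exact Hl.
Qed.

Lemma Gamma_pos t : 0 < t -> 0 < Gamma t.
Proof.
  intros Ht. destruct (ex_Gamma_integral t Ht) as [l [Hl Hpos]].
  unfold Gamma. fold (gamma_integrand t). rewrite (is_RInt_gen_unique _ _ Hl). exact Hpos.
Qed.

Lemma Gamma_eq_of_lim t (Phi : R -> R -> R) l : 0 < t ->
  (forall a b, 0 < a -> 0 < b -> RInt (gamma_integrand t) a b = Phi a b) ->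
  filterlim (fun ab => Phi (fst ab) (snd ab)) at_0_pinfty (locally l) ->
  Gamma t = l.
Proof.
  intros Ht HPhi Hlim. unfold Gamma. fold (gamma_integrand t).
  apply (is_RInt_gen_unique (V:=R_CompleteNormedModule)).
  apply (is_RInt_gen_0_pinfty _ Phi); [|exact Hlim].
  intros a b Ha Hb. split; [apply ex_RInt_gamma_integrand | apply HPhi]; assumption.
Qed.

Lemma lim_power_exp_at_right0 t : 0 < t ->
  filterlim (fun a => exp (t * ln a) * exp (- a)) (at_right 0) (locally 0).
Proof.
  intros Ht. apply filterlim_locally. intros eps.
  exists (mkposreal _ (exp_pos (ln eps / t))). intros y Hy Hy0. ball_bounds Hy. apply ball_R_abs.
  assert (H1 : ln y < ln eps / t).
  { rewrite <- (ln_exp (ln eps / t)). apply ln_increasing; lra. }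
  assert (H2 : t * ln y < ln eps).
  { apply Rmult_lt_compat_l with (r := t) in H1; [|exact Ht]. field_simplify in H1; lra. }
  assert (H3 : exp (t * ln y) < eps).
  { rewrite <- (exp_ln eps) by (destruct eps; simpl; lra). apply exp_increasing; exact H2. }
  pose proof (exp_pos (t * ln y)). pose proof (exp_pos (- y)). pose proof (exp_opp_le_1 y ltac:(lra)).
  rewrite Rminus_0_r, Rabs_pos_eq by nra. nra.
Qed.

Lemma lim_power_exp_pinfty t :
  filterlim (fun b => exp (t * ln b) * exp (- b)) (Rbar_locally p_infty) (locally 0).
Proof.
  apply filterlim_locally. intros eps.
  set (C := Rabs t * ln (2 * Rabs t + 2)).
  exists (Rmax 1 (2 * (C - ln eps))). intros b Hb. apply ball_R_abs.
  assert (Hb1 : 1 < b) by (eapply Rle_lt_trans; [apply Rmax_l | exact Hb]).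
  assert (Hb2 : 2 * (C - ln eps) < b) by (eapply Rle_lt_trans; [apply Rmax_r | exact Hb]).
  pose proof (ln_le_linear t b ltac:(lra)) as Hl. fold C in Hl.
  rewrite <- exp_plus, Rminus_0_r, Rabs_pos_eq by (left; apply exp_pos).
  rewrite <- (exp_ln eps) by (destruct eps; simpl; lra). apply exp_increasing. lra.
Qed.

Lemma Gamma_succ t : 0 < t -> Gamma (t + 1) = t * Gamma t.
Proof.
  intros Ht.
  set (h := fun u => - (exp (t * ln u) * exp (- u))).
  (* integration by parts: d/du (- u^t e^(-u)) = u^t e^(-u) - t u^(t-1) e^(-u) *)
  apply (Gamma_eq_of_lim _ (fun a b => h b - h a + t * RInt (gamma_integrand t) a b)); [lra | |].
  - intros a b Ha Hb.
    assert (H : is_RInt (fun u => minus (gamma_integrand (t + 1) u) (scal t (gamma_integrand t u)))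
                  a b (minus (h b) (h a))).
    { apply (is_RInt_derive h).
      - intros x Hx. pose proof (between_pos a b x Ha Hb Hx). unfold h. auto_derive; [lra|].
        rewrite !gamma_integrand_exp by lra. unfold minus, plus, opp, scal; simpl. unfold mult; simpl.
        replace (t + 1 - 1) with t by ring. replace (t * ln x - x) with (t * ln x + - x) by ring.
        replace ((t - 1) * ln x - x) with (t * ln x + - x + - ln x) by ring.
        rewrite !exp_plus, (exp_Ropp (ln x)), exp_ln by lra. field. lra.
      - intros x Hx. pose proof (between_pos a b x Ha Hb Hx).
        apply (continuous_minus (V:=R_NormedModule)); [|apply (continuous_scal_r (V:=R_NormedModule))];
          apply gamma_integrand_continuous; lra. }
    apply (is_RInt_unique (V:=R_CompleteNormedModule)) in H.
    rewrite (RInt_minus (V:=R_CompleteNormedModule)) in H;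
      [| apply ex_RInt_gamma_integrand; auto
       | apply (ex_RInt_scal (V:=R_NormedModule)), ex_RInt_gamma_integrand; auto].
    rewrite (RInt_scal (V:=R_CompleteNormedModule)) in H by (apply ex_RInt_gamma_integrand; auto).
    unfold minus, plus, opp, scal in H; simpl in H; unfold mult in H; simpl in H. lra.
  - replace (t * Gamma t) with (- 0 - - 0 + t * Gamma t) by ring.
    apply filterlim_R_plus; [apply filterlim_R_minus | apply filterlim_R_scal].
    + apply (filterlim_prod_snd h). apply filterlim_R_opp. apply lim_power_exp_pinfty.
    + apply (filterlim_prod_fst h). apply filterlim_R_opp. apply lim_power_exp_at_right0; exact Ht.
    + apply is_RInt_gen_RInt_lim. apply is_RInt_gen_Gamma; exact Ht.
Qed.

Lemma Gamma_one : Gamma 1 = 1.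
Proof.
  apply (Gamma_eq_of_lim _ (fun a b => exp (- a) - exp (- b))); [lra | |].
  - intros a b Ha Hb. apply (is_RInt_unique (V:=R_CompleteNormedModule)).
    replace (exp (- a) - exp (- b)) with (minus (- exp (- b)) (- exp (- a)))
      by (unfold minus, plus, opp; simpl; ring).
    apply (is_RInt_derive (fun u => - exp (- u))).
    + intros x Hx. auto_derive; [auto|]. unfold gamma_integrand, Rpower.
      rewrite Rminus_diag, Rmult_0_l, exp_0. ring.
    + intros x Hx. apply gamma_integrand_continuous. exact (between_pos a b x Ha Hb Hx).
  - rewrite <- (Rminus_0_r 1). apply filterlim_R_minus.
    + apply (filterlim_prod_fst (fun a => exp (- a))). rewrite <- exp_0. replace 0 with (- 0) at 2 by ring.
      apply (continuous_at_right (fun a => exp (- a))).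
      apply ex_derive_continuous_R. auto_derive. auto.
    + apply (filterlim_prod_snd (fun b => exp (- b))).
      eapply filterlim_ext; [|apply (lim_power_exp_pinfty 0)].
      intros x. simpl. rewrite Rmult_0_l, exp_0. ring.
Qed.

Definition lnGamma (x : R) : R := ln (Gamma x).

Lemma lnGamma_succ x : 0 < x -> lnGamma (x + 1) = lnGamma x + ln x.
Proof.
  intros Hx. unfold lnGamma. rewrite Gamma_succ, ln_mult by (try apply Gamma_pos; exact Hx). ring.
Qed.

Lemma lnGamma_one : lnGamma 1 = 0.
Proof. unfold lnGamma. rewrite Gamma_one. apply ln_1. Qed.

Lemma gamma_integrand_convex t s l u A B : 0 < u -> 0 < A -> 0 < B -> 0 <= l <= 1 ->
  gamma_integrand (l * t + (1 - l) * s) u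
  <= exp (l * ln A + (1 - l) * ln B)
     * (l / A * gamma_integrand t u + (1 - l) / B * gamma_integrand s u).
Proof.
  intros Hu HA HB Hl. rewrite !gamma_integrand_exp by exact Hu.
  set (X := (t - 1) * ln u - u - ln A). set (Y := (s - 1) * ln u - u - ln B).
  assert (EX : exp ((t - 1) * ln u - u) = A * exp X).
  { unfold X. replace ((t - 1) * ln u - u - ln A) with ((t - 1) * ln u - u + - ln A) by ring.
    rewrite exp_plus, exp_Ropp, exp_ln by lra. field. lra. }
  assert (EY : exp ((s - 1) * ln u - u) = B * exp Y).
  { unfold Y. replace ((s - 1) * ln u - u - ln B) with ((s - 1) * ln u - u + - ln B) by ring.
    rewrite exp_plus, exp_Ropp, exp_ln by lra. field. lra. }
  replace ((l * t + (1 - l) * s - 1) * ln u - u)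
    with ((l * ln A + (1 - l) * ln B) + (l * X + (1 - l) * Y)) by (unfold X, Y; ring).
  rewrite exp_plus, EX, EY.
  replace (l / A * (A * exp X) + (1 - l) / B * (B * exp Y))
    with (l * exp X + (1 - l) * exp Y) by (field; lra).
  apply Rmult_le_compat_l; [left; apply exp_pos | apply exp_convex; exact Hl].
Qed.

Lemma lnGamma_convex : convex_pos lnGamma.
Proof.
  intros x y l Hx Hy Hl. unfold lnGamma.
  set (z := l * x + (1 - l) * y).
  assert (Hz : 0 < z) by (unfold z; destruct (Rle_lt_dec l 0); [replace l with 0 by lra; lra | nra]).
  set (A := Gamma x). set (B := Gamma y).
  assert (HA : 0 < A) by (apply Gamma_pos; lra). assert (HB : 0 < B) by (apply Gamma_pos; lra).
  set (C := exp (l * ln A + (1 - l) * ln B)).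
  set (comb := fun u => C * (l / A * gamma_integrand x u + (1 - l) / B * gamma_integrand y u)).
  assert (Hcomb : is_RInt_gen comb (at_right 0) (Rbar_locally p_infty) C).
  { replace C with (scal C (plus (scal (l / A) A) (scal ((1 - l) / B) B)))
      by (unfold plus, scal; simpl; unfold mult; simpl; field; lra).
    apply (is_RInt_gen_scal (V:=R_NormedModule)).
    apply (is_RInt_gen_plus (V:=R_NormedModule)); apply (is_RInt_gen_scal (V:=R_NormedModule));
      apply is_RInt_gen_Gamma; lra. }
  assert (Hle : Rabs (Gamma z) <= C).
  { apply (@RInt_gen_norm R_CompleteNormedModule (at_right 0) (Rbar_locally p_infty) _ _
             (gamma_integrand z) comb); [| | apply is_RInt_gen_Gamma, Hz | exact Hcomb].
    - apply (Filter_prod _ _ _ (fun a => a < 1) (fun b => 1 < b));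
        [apply at_right_lt; lra | apply pinfty_gt | simpl; intros; lra].
    - apply (Filter_prod _ _ _ (fun a => 0 < a) (fun b => True));
        [apply at_right_gt | apply filter_true |].
      intros a b Ha _ u Hu. simpl in *. unfold norm; simpl; unfold abs; simpl.
      rewrite Rabs_pos_eq by (left; apply gamma_integrand_pos).
      apply gamma_integrand_convex; lra. }
  rewrite Rabs_pos_eq in Hle by (left; apply Gamma_pos, Hz).
  apply ln_le in Hle; [|apply Gamma_pos, Hz]. unfold C in Hle. rewrite ln_exp in Hle. exact Hle.
Qed.

Lemma lnGamma_continuous x : 0 < x -> continuous lnGamma x.
Proof. intros Hx. apply convex_pos_continuous; [apply lnGamma_convex | exact Hx]. Qed.

Lemma ex_RInt_lnGamma a b : 0 < a -> 0 < b -> ex_RInt lnGamma a b.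
Proof.
  intros Ha Hb. apply ex_RInt_continuous_R. intros z Hz.
  apply lnGamma_continuous, (between_pos a b z Ha Hb Hz).
Qed.

(** * The Gaussian integral and Gamma(1/2) *)

Lemma continuity_2d_pt_comp (f : R -> R -> R) (h : R -> R) x y :
  continuity_2d_pt f x y -> continuous h (f x y) ->
  continuity_2d_pt (fun u v => h (f u v)) x y.
Proof.
  intros Hf Hh. apply continuity_2d_pt_filterlim. apply continuity_2d_pt_filterlim in Hf.
  eapply filterlim_comp; [exact Hf | exact Hh].
Qed.

Definition gauss (t : R) : R := exp (- (t * t)).
Definition gauss_int (x : R) : R := RInt gauss 0 x.
Definition gauss_kernel (x t : R) : R := exp (- (x * x * (1 + t * t))) / (1 + t * t).
Definition gauss_kernel_dx (x t : R) : R := -2 * x * exp (- (x * x * (1 + t * t))).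
Definition gauss_aux (x : R) : R := RInt (gauss_kernel x) 0 1.

Lemma one_plus_sq_pos t : 0 < 1 + t * t.
Proof. nra. Qed.

Lemma gauss_continuous t : continuous gauss t.
Proof. apply ex_derive_continuous_R. unfold gauss. auto_derive. auto. Qed.

Lemma ex_RInt_gauss a b : ex_RInt gauss a b.
Proof. apply ex_RInt_continuous_R. intros; apply gauss_continuous. Qed.

Lemma gauss_kernel_derive x t : is_derive (fun u => gauss_kernel u t) x (gauss_kernel_dx x t).
Proof. pose proof (one_plus_sq_pos t). unfold gauss_kernel, gauss_kernel_dx. auto_derive; [lra|]. field. lra. Qed.

Lemma gauss_kernel_continuous x t : continuous (gauss_kernel x) t.
Proof.
  pose proof (one_plus_sq_pos t). apply ex_derive_continuous_R. unfold gauss_kernel. auto_derive. lra.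
Qed.

Lemma gauss_kernel_dx_continuity_2d x t : continuity_2d_pt gauss_kernel_dx x t.
Proof.
  unfold gauss_kernel_dx.
  apply (continuity_2d_pt_mult (fun u v => -2 * u) (fun u v => exp (- (u * u * (1 + v * v))))).
  - apply (continuity_2d_pt_mult (fun u v => -2) (fun u v => u));
      [apply continuity_2d_pt_const | apply continuity_2d_pt_id1].
  - apply (continuity_2d_pt_comp (fun u v => - (u * u * (1 + v * v))) exp).
    + apply continuity_2d_pt_opp.
      apply (continuity_2d_pt_mult (fun u v => u * u) (fun u v => 1 + v * v)).
      * apply (continuity_2d_pt_mult (fun u v => u) (fun u v => u)); apply continuity_2d_pt_id1.
      * apply (continuity_2d_pt_plus (fun u v => 1) (fun u v => v * v)); [apply continuity_2d_pt_const|].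
        apply (continuity_2d_pt_mult (fun u v => v) (fun u v => v)); apply continuity_2d_pt_id2.
    + apply ex_derive_continuous_R. auto_derive. auto.
Qed.

Lemma gauss_aux_derive x : is_derive gauss_aux x (RInt (gauss_kernel_dx x) 0 1).
Proof.
  unfold gauss_aux.
  rewrite (RInt_ext _ (fun t => Derive (fun u => gauss_kernel u t) x))
    by (intros; symmetry; apply is_derive_unique, gauss_kernel_derive).
  apply (is_derive_RInt_param gauss_kernel 0 1 x).
  - apply filter_forall. intros y t _. eexists. apply gauss_kernel_derive.
  - intros t _. apply (continuity_2d_pt_ext gauss_kernel_dx).
    + intros u v. symmetry. apply is_derive_unique, gauss_kernel_derive.
    + apply gauss_kernel_dx_continuity_2d.
  - apply filter_forall. intros y. apply ex_RInt_continuous_R. intros; apply gauss_kernel_continuous.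
Qed.

Lemma RInt_gauss_kernel_dx x : RInt (gauss_kernel_dx x) 0 1 = -2 * gauss x * gauss_int x.
Proof.
  (* substitute s = x t *)
  rewrite (RInt_ext _ (fun t => scal (-2 * gauss x) (scal x (gauss (x * t + 0))))).
  2:{ intros t _. unfold gauss_kernel_dx, gauss, scal; simpl; unfold mult; simpl.
      replace (exp (- (x * x * (1 + t * t))))
        with (exp (- (x * x)) * exp (- ((x * t + 0) * (x * t + 0))))
        by (rewrite <- exp_plus; f_equal; ring). ring. }
  rewrite (RInt_scal (V:=R_CompleteNormedModule))
    by (apply (ex_RInt_comp_lin (V:=R_NormedModule)), ex_RInt_gauss).
  rewrite (RInt_comp_lin (V:=R_CompleteNormedModule)) by apply ex_RInt_gauss.
  replace (x * 0 + 0) with 0 by ring. replace (x * 1 + 0) with x by ring.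
  unfold scal; simpl; unfold mult; simpl. reflexivity.
Qed.

Lemma gauss_int_derive x : is_derive gauss_int x (gauss x).
Proof.
  apply (is_derive_RInt gauss gauss_int 0 x); [|apply gauss_continuous].
  apply filter_forall. intros b. apply (RInt_correct (V:=R_CompleteNormedModule)), ex_RInt_gauss.
Qed.

Lemma gauss_int_continuous x : continuous gauss_int x.
Proof. apply ex_derive_continuous_R. eexists. apply gauss_int_derive. Qed.

Lemma gauss_int_sq_plus_aux x : gauss_int x * gauss_int x + gauss_aux x = PI / 4.
Proof.
  (* the left-hand side has derivative 2 E E' - 2 E' E = 0 *)
  transitivity (gauss_int 0 * gauss_int 0 + gauss_aux 0).
  - apply (is_derive_0_eq (fun y => gauss_int y * gauss_int y + gauss_aux y)). intros y _.
    replace 0 with (plus (plus (mult (gauss y) (gauss_int y)) (mult (gauss_int y) (gauss y)))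
                         (RInt (gauss_kernel_dx y) 0 1))
      by (rewrite RInt_gauss_kernel_dx; unfold plus, mult; simpl; ring).
    apply (is_derive_plus (fun y => mult (gauss_int y) (gauss_int y)) gauss_aux).
    + apply (is_derive_mult gauss_int gauss_int); [apply gauss_int_derive | apply gauss_int_derive |].
      intros; apply Rmult_comm.
    + apply gauss_aux_derive.
  - unfold gauss_int, gauss_aux. rewrite RInt_point. unfold zero; simpl.
    rewrite (RInt_ext _ (fun t => / (1 + t²))).
    2:{ intros t _. unfold gauss_kernel, Rsqr. rewrite Rmult_0_l, Rmult_0_l, Ropp_0, exp_0.
        unfold Rdiv. apply Rmult_1_l. }
    rewrite (is_RInt_unique (V:=R_CompleteNormedModule) _ _ _ (minus (atan 1) (atan 0))).
    + rewrite atan_1, atan_0. unfold minus, plus, opp; simpl. ring.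
    + apply (is_RInt_derive atan); [intros; apply is_derive_atan|].
      intros t _. apply ex_derive_continuous_R. auto_derive. unfold Rsqr. pose proof (one_plus_sq_pos t). lra.
Qed.

Lemma gauss_aux_bound x : 0 <= gauss_aux x <= exp (- (x * x)).
Proof.
  unfold gauss_aux. split.
  - apply RInt_ge_0; [lra | apply ex_RInt_continuous_R; intros; apply gauss_kernel_continuous |].
    intros t _. unfold gauss_kernel. pose proof (one_plus_sq_pos t).
    left. apply Rdiv_lt_0_compat; [apply exp_pos | lra].
  - apply Rle_trans with (RInt (fun _ => exp (- (x * x))) 0 1);
      [| rewrite RInt_const; unfold scal; simpl; unfold mult; simpl; lra].
    apply RInt_le; [lra | apply ex_RInt_continuous_R; intros; apply gauss_kernel_continuous |
                    apply ex_RInt_const |].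
    intros t Ht. unfold gauss_kernel. pose proof (one_plus_sq_pos t).
    replace (exp (- (x * x * (1 + t * t)))) with (exp (- (x * x)) * exp (- (x * x * (t * t))))
      by (rewrite <- exp_plus; f_equal; ring).
    pose proof (exp_pos (- (x * x))). pose proof (exp_pos (- (x * x * (t * t)))).
    pose proof (exp_opp_le_1 (x * x * (t * t)) ltac:(nra)).
    apply Rmult_le_reg_r with (1 + t * t); [lra|]. unfold Rdiv.
    rewrite Rmult_assoc, Rinv_l by lra. nra.
Qed.

Lemma gauss_aux_lim : filterlim gauss_aux (Rbar_locally p_infty) (locally 0).
Proof.
  change (filterlim gauss_aux (Rbar_locally p_infty) (Rbar_locally (Finite 0))).
  apply (filterlim_le_le (fun _ => 0) gauss_aux (fun b => exp (0 * ln b) * exp (- b)));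
    [| exact (filterlim_const 0) | exact (lim_power_exp_pinfty 0)].
  apply (filter_imp (fun b => 1 < b)); [|apply pinfty_gt].
  intros b Hb. pose proof (gauss_aux_bound b).
  rewrite Rmult_0_l, exp_0, Rmult_1_l. split; [lra|].
  apply Rle_trans with (exp (- (b * b))); [lra | apply exp_le_compat; nra].
Qed.

Lemma gauss_int_lim : filterlim gauss_int (Rbar_locally p_infty) (locally (sqrt PI / 2)).
Proof.
  apply (filterlim_ext_loc (fun x => sqrt (PI / 4 - gauss_aux x))).
  { apply (filter_imp (fun x => 0 < x)); [|apply pinfty_gt]. intros x Hx.
    rewrite <- (gauss_int_sq_plus_aux x). replace (_ + _ - _) with (gauss_int x * gauss_int x) by ring.
    apply sqrt_square. apply RInt_ge_0; [lra | apply ex_RInt_gauss | intros; left; apply exp_pos]. }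
  replace (sqrt PI / 2) with (sqrt (PI / 4 - 0)).
  - apply (filterlim_comp _ _ _ (fun x => PI / 4 - gauss_aux x) sqrt _ (locally (PI / 4 - 0))).
    + apply filterlim_R_minus; [apply filterlim_const | apply gauss_aux_lim].
    + apply ex_derive_continuous_R. auto_derive. pose proof PI_RGT_0. lra.
  - replace (PI / 4 - 0) with (PI / (2 * 2)) by field.
    rewrite sqrt_div_alt by lra. rewrite sqrt_square by lra. reflexivity.
Qed.

Lemma RInt_gamma_integrand_half a b : 0 < a -> 0 < b ->
  RInt (gamma_integrand (1 / 2)) a b = 2 * (gauss_int (sqrt b) - gauss_int (sqrt a)).
Proof.
  (* substitute u = s^2 *)
  intros Ha Hb.
  assert (Hsa : 0 < sqrt a) by (apply sqrt_lt_R0; lra).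
  assert (Hsb : 0 < sqrt b) by (apply sqrt_lt_R0; lra).
  pose proof (RInt_comp (V:=R_CompleteNormedModule) (gamma_integrand (1 / 2))
                (fun s => s * s) (fun s => 2 * s) (sqrt a) (sqrt b)) as H.
  cbv beta in H. rewrite !sqrt_sqrt in H by lra. rewrite <- H.
  - rewrite (RInt_ext _ (fun y => scal 2 (gauss y))).
    + rewrite (RInt_scal (V:=R_CompleteNormedModule)) by apply ex_RInt_gauss.
      unfold scal; simpl; unfold mult; simpl. f_equal. unfold gauss_int.
      rewrite <- (RInt_Chasles (V:=R_CompleteNormedModule) gauss 0 (sqrt a) (sqrt b))
        by apply ex_RInt_gauss.
      unfold plus; simpl. lra.
    + intros y Hy. pose proof (between_pos (sqrt a) (sqrt b) y Hsa Hsb ltac:(lra)).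
      unfold scal; simpl; unfold mult; simpl. unfold gamma_integrand, gauss, Rpower.
      rewrite ln_mult by lra.
      replace ((1 / 2 - 1) * (ln y + ln y)) with (- ln y) by field.
      rewrite exp_Ropp, exp_ln by lra. field. lra.
  - intros y Hy. pose proof (between_pos (sqrt a) (sqrt b) y Hsa Hsb Hy).
    apply gamma_integrand_continuous. nra.
  - intros y Hy. split; [auto_derive; [auto | ring] | apply ex_derive_continuous_R; auto_derive; auto].
Qed.

Lemma sqrt_lim_pinfty : filterlim sqrt (Rbar_locally p_infty) (Rbar_locally p_infty).
Proof.
  intros P [M HM]. exists (Rmax 0 M * Rmax 0 M). intros b Hb. apply HM.
  assert (H0 : 0 <= Rmax 0 M) by apply Rmax_l. assert (HM' : M <= Rmax 0 M) by apply Rmax_r.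
  apply Rle_lt_trans with (Rmax 0 M); auto.
  rewrite <- (sqrt_square (Rmax 0 M)) at 1 by exact H0.
  apply sqrt_lt_1_alt. split; [nra | exact Hb].
Qed.

Lemma Gamma_half : Gamma (1 / 2) = sqrt PI.
Proof.
  apply (Gamma_eq_of_lim _ (fun a b => 2 * (gauss_int (sqrt b) - gauss_int (sqrt a))));
    [lra | apply RInt_gamma_integrand_half |].
  replace (sqrt PI) with (2 * (sqrt PI / 2 - gauss_int (sqrt 0)))
    by (rewrite sqrt_0; unfold gauss_int; rewrite RInt_point; unfold zero; simpl; field).
  apply filterlim_R_scal, filterlim_R_minus.
  - apply (filterlim_prod_snd (fun b => gauss_int (sqrt b))).
    apply (filterlim_comp _ _ _ sqrt gauss_int _ (Rbar_locally p_infty));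
      [apply sqrt_lim_pinfty | apply gauss_int_lim].
  - apply (filterlim_prod_fst (fun a => gauss_int (sqrt a))).
    apply (continuous_at_right (fun a => gauss_int (sqrt a)) 0).
    apply (continuous_comp sqrt gauss_int); [|apply gauss_int_continuous].
    apply continuity_pt_filterlim, continuity_pt_sqrt. lra.
Qed.

Lemma lnGamma_half : lnGamma (1 / 2) = ln PI / 2.
Proof.
  unfold lnGamma. rewrite Gamma_half. pose proof PI_RGT_0.
  rewrite <- (sqrt_sqrt PI) at 2 by lra. rewrite ln_mult by (apply sqrt_lt_R0; lra). field.
Qed.

(** * Bohr-Mollerup uniqueness and Gauss's multiplication formula *)

Section BohrMollerup.
Variables phi psi : R -> R.
Hypothesis phi_convex : convex_pos phi.
Hypothesis psi_convex : convex_pos psi.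
Hypothesis phi_succ : forall x, 0 < x -> phi (x + 1) = phi x + ln x.
Hypothesis psi_succ : forall x, 0 < x -> psi (x + 1) = psi x + ln x.
Hypothesis phi_psi_1 : phi 1 = psi 1.

Let d x := phi x - psi x.

Lemma BM_diff_shift m x : 0 < x -> d (x + INR m) = d x.
Proof.
  induction m as [|m IH]; intros Hx; [simpl; rewrite Rplus_0_r; reflexivity|].
  rewrite S_INR. replace (x + (INR m + 1)) with ((x + INR m) + 1) by ring.
  rewrite <- (IH Hx). pose proof (pos_INR m).
  unfold d. rewrite phi_succ, psi_succ by lra. ring.
Qed.

Lemma BM_diff_small x m : 0 < x < 1 -> (0 < m)%nat -> Rabs (d x) <= x / INR m.
Proof.
  (* with y = m + 1, both increments f (y + x) - f y lie in [x ln (y - 1), x ln y], of length <= x/m *)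
  intros Hx Hm.
  assert (Hm1 : 1 <= INR m) by (apply (le_INR 1); lia).
  set (y := INR m + 1).
  pose proof (convex_pos_increment_bounds phi y x phi_convex phi_succ ltac:(unfold y; lra) Hx) as Bphi.
  pose proof (convex_pos_increment_bounds psi y x psi_convex psi_succ ltac:(unfold y; lra) Hx) as Bpsi.
  assert (E1 : d (y + x) = d x).
  { unfold y. replace (INR m + 1 + x) with (x + INR (S m)) by (rewrite S_INR; ring). apply BM_diff_shift; lra. }
  assert (E2 : d y = 0).
  { unfold y. rewrite Rplus_comm, BM_diff_shift by lra. unfold d. rewrite phi_psi_1. ring. }
  assert (Hln : ln y - ln (y - 1) <= 1 / INR m).
  { pose proof (ln_div_1_le y (y - 1) ltac:(unfold y; lra) ltac:(unfold y; lra)) as Hl.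
    replace (y / (y - 1) - 1) with (1 / INR m) in Hl by (unfold y; field; lra). exact Hl. }
  assert (Hd : Rabs (d x) <= x * (ln y - ln (y - 1))).
  { rewrite <- E1. apply Rabs_le. unfold d in *. nra. }
  eapply Rle_trans; [exact Hd|]. unfold Rdiv. rewrite <- (Rmult_1_l (/ INR m)).
  apply Rmult_le_compat_l; lra.
Qed.

Lemma BM_diff_zero_01 x : 0 < x < 1 -> d x = 0.
Proof.
  intros Hx. destruct (Req_dec (d x) 0) as [H | H]; [exact H | exfalso].
  destruct (archimed_cor1 (Rabs (d x)) (Rabs_pos_lt _ H)) as [m [Hm Hm0]].
  pose proof (BM_diff_small x m Hx Hm0).
  assert (x / INR m < / INR m).
  { unfold Rdiv. rewrite <- (Rmult_1_l (/ INR m)) at 2.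
    apply Rmult_lt_compat_r; [apply Rinv_0_lt_compat, lt_0_INR, Hm0 | lra]. }
  lra.
Qed.

Lemma Bohr_Mollerup_unique x : 0 < x -> phi x = psi x.
Proof.
  intros Hx.
  assert (P : forall n : nat, forall z, 0 < z <= INR n + 1 -> d z = 0).
  { induction n as [|n IH]; intros z Hz.
    - simpl in Hz. destruct (Req_dec z 1) as [-> | Hz1]; [unfold d; rewrite phi_psi_1; ring|].
      apply BM_diff_zero_01. lra.
    - rewrite S_INR in Hz. pose proof (pos_INR n).
      destruct (Rle_lt_dec z (INR n + 1)) as [Hle | Hgt]; [apply IH; lra|].
      replace z with ((z - 1) + 1) by ring.
      unfold d. rewrite phi_succ, psi_succ by lra.
      replace (phi (z - 1) + ln (z - 1) - (psi (z - 1) + ln (z - 1))) with (d (z - 1)) by (unfold d; ring).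
      apply IH. lra. }
  destruct (nfloor_ex x ltac:(lra)) as [n Hn].
  assert (d x = 0) by (apply (P n); lra). unfold d in *. lra.
Qed.

End BohrMollerup.

Section GaussMultiplication.
Variable n : nat.
Hypothesis n_pos : (1 <= n)%nat.

Let N := INR n.

Let N_pos : 0 < N.
Proof. unfold N. apply lt_0_INR. lia. Qed.

Definition gauss_mult_const := sumR n (fun j => lnGamma ((1 + INR j) / INR n)) + ln (INR n).

Let mult_lhs x := sumR n (fun j => lnGamma ((x + INR j) / N)) + x * ln N - gauss_mult_const.

Lemma mult_lhs_convex : convex_pos mult_lhs.
Proof.
  intros x y l Hx Hy Hl. pose proof N_pos. unfold mult_lhs.
  assert (S : sumR n (fun j => lnGamma ((l * x + (1 - l) * y + INR j) / N))
              <= l * sumR n (fun j => lnGamma ((x + INR j) / N))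
                 + (1 - l) * sumR n (fun j => lnGamma ((y + INR j) / N))).
  { rewrite <- !sumR_scal, <- sumR_plus. apply sumR_le. intros j _. pose proof (pos_INR j).
    replace ((l * x + (1 - l) * y + INR j) / N)
      with (l * ((x + INR j) / N) + (1 - l) * ((y + INR j) / N)) by (field; lra).
    apply lnGamma_convex; try lra; apply Rdiv_lt_0_compat; lra. }
  nra.
Qed.

Lemma mult_lhs_succ x : 0 < x -> mult_lhs (x + 1) = mult_lhs x + ln x.
Proof.
  (* x -> x + 1 shifts j -> j + 1, so the sum telescopes to lnGamma (x/N + 1) - lnGamma (x/N) *)
  intros Hx. pose proof N_pos. unfold mult_lhs.
  set (G := fun j => lnGamma ((x + INR j) / N)).
  rewrite (sumR_ext n _ (fun j => G (S j))) by (intros; unfold G; rewrite S_INR; do 2 f_equal; ring).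
  rewrite sumR_shift. unfold G. simpl INR. fold N.
  replace ((x + N) / N) with (x / N + 1) by (field; lra).
  replace ((x + 0) / N) with (x / N) by (field; lra).
  rewrite lnGamma_succ by (apply Rdiv_lt_0_compat; lra).
  unfold Rdiv. rewrite ln_mult, ln_Rinv by (try apply Rinv_0_lt_compat; lra). ring.
Qed.

Lemma lnGamma_mult x : 0 < x ->
  sumR n (fun j => lnGamma ((x + INR j) / INR n)) + x * ln (INR n) = lnGamma x + gauss_mult_const.
Proof.
  intros Hx.
  pose proof (Bohr_Mollerup_unique mult_lhs lnGamma mult_lhs_convex lnGamma_convex mult_lhs_succ lnGamma_succ
                ltac:(unfold mult_lhs, gauss_mult_const; rewrite lnGamma_one; fold N; ring) x Hx) as H.
  unfold mult_lhs in H. fold N. lra.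
Qed.

End GaussMultiplication.

(** * Raabe's integral *)

Lemma RInt_lnGamma_derive a x : 0 < a -> 0 < x ->
  is_derive (fun y => RInt lnGamma a y) x (lnGamma x).
Proof.
  intros Ha Hx. apply (is_derive_RInt lnGamma (fun y => RInt lnGamma a y) a x);
    [|apply lnGamma_continuous; exact Hx].
  exists (mkposreal (x / 2) ltac:(lra)). intros y Hy. ball_bounds Hy.
  apply (RInt_correct (V:=R_CompleteNormedModule)). apply ex_RInt_lnGamma; lra.
Qed.

Definition Raabe (x : R) : R := RInt lnGamma x (x + 1).

Lemma Raabe_split x : 0 < x -> Raabe x = RInt lnGamma 1 (x + 1) - RInt lnGamma 1 x.
Proof.
  intros Hx. unfold Raabe. rewrite <- (RInt_Chasles (V:=R_CompleteNormedModule) lnGamma 1 x (x + 1))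
    by (apply ex_RInt_lnGamma; lra).
  unfold plus; simpl. lra.
Qed.

Lemma Raabe_affine x : 0 < x -> Raabe x = (Raabe 1 + 1) + x * ln x - x.
Proof.
  (* Raabe' = lnGamma (x + 1) - lnGamma x = ln x *)
  intros Hx. set (Rem := fun y => RInt lnGamma 1 (y + 1) - RInt lnGamma 1 y - y * ln y + y).
  assert (HR : Rem x = Rem 1).
  { apply is_derive_0_eq. intros y Hy. pose proof (between_pos 1 x y ltac:(lra) Hx Hy). unfold Rem.
    replace 0 with (1 * lnGamma (y + 1) - lnGamma y - (1 * ln y + y * / y) + 1)
      by (rewrite lnGamma_succ by lra; field; lra).
    apply (is_derive_plus (fun y => RInt lnGamma 1 (y + 1) - RInt lnGamma 1 y - y * ln y) (fun y => y));
      [|auto_derive; auto; ring].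
    apply (is_derive_minus (fun y => RInt lnGamma 1 (y + 1) - RInt lnGamma 1 y) (fun y => y * ln y));
      [|auto_derive; lra].
    apply (is_derive_minus (fun y => RInt lnGamma 1 (y + 1)) (fun y => RInt lnGamma 1 y));
      [|apply RInt_lnGamma_derive; lra].
    apply (is_derive_comp (fun z => RInt lnGamma 1 z) (fun y => y + 1));
      [apply RInt_lnGamma_derive; lra | auto_derive; auto; ring]. }
  unfold Rem in HR. rewrite ln_1 in HR. rewrite !Raabe_split by lra. lra.
Qed.

Lemma lnGamma_dup x : 0 < x ->
  lnGamma (x / 2) + lnGamma ((x + 1) / 2) + x * ln 2 = lnGamma x + (ln PI / 2 + ln 2).
Proof.
  intros Hx. pose proof (lnGamma_mult 2 ltac:(lia) x Hx) as H.
  unfold gauss_mult_const in H. replace (INR 2) with 2 in H by (simpl; ring). simpl sumR in H.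
  replace ((x + 0) / 2) with (x / 2) in H by field.
  replace ((1 + 0) / 2) with (1 / 2) in H by field. replace ((1 + 1) / 2) with 1 in H by field.
  rewrite lnGamma_one, lnGamma_half in H. lra.
Qed.

Lemma Raabe_one : Raabe 1 + 1 = ln (2 * PI) / 2.
Proof.
  (* integrate the duplication formula over [1, 2] *)
  assert (Hhalf : is_RInt (fun x => lnGamma (x / 2)) 1 2 (2 * RInt lnGamma (/ 2) 1)).
  { apply (is_RInt_ext (fun x => lnGamma (/ 2 * x + 0))); [intros; f_equal; field|].
    replace (2 * RInt lnGamma (/ 2) 1) with (/ / 2 * RInt lnGamma (/ 2 * 1 + 0) (/ 2 * 2 + 0))
      by (f_equal; [field | f_equal; field]).
    apply is_RInt_affine; [lra | apply ex_RInt_lnGamma; lra]. }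
  assert (Hhalf1 : is_RInt (fun x => lnGamma ((x + 1) / 2)) 1 2 (2 * RInt lnGamma 1 (3 / 2))).
  { apply (is_RInt_ext (fun x => lnGamma (/ 2 * x + / 2))); [intros; f_equal; field|].
    replace (2 * RInt lnGamma 1 (3 / 2)) with (/ / 2 * RInt lnGamma (/ 2 * 1 + / 2) (/ 2 * 2 + / 2))
      by (f_equal; [field | f_equal; field]).
    apply is_RInt_affine; [lra | apply ex_RInt_lnGamma; lra]. }
  assert (Hlin : is_RInt (fun x => x * ln 2) 1 2 (3 / 2 * ln 2)).
  { replace (3 / 2 * ln 2) with (minus (2 * 2 / 2 * ln 2) (1 * 1 / 2 * ln 2))
      by (unfold minus, plus, opp; simpl; field).
    apply (is_RInt_derive (fun x => x * x / 2 * ln 2)); intros x _;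
      [auto_derive; auto; field | apply ex_derive_continuous_R; auto_derive; auto]. }
  assert (Hrhs : is_RInt (fun x => lnGamma x + (ln PI / 2 + ln 2)) 1 2 (Raabe 1 + (ln PI / 2 + ln 2))).
  { apply (is_RInt_plus (V:=R_NormedModule) lnGamma (fun _ => ln PI / 2 + ln 2)).
    - unfold Raabe. replace (1 + 1) with 2 by ring.
      apply (RInt_correct (V:=R_CompleteNormedModule)), ex_RInt_lnGamma; lra.
    - pose proof (is_RInt_const (V:=R_NormedModule) 1 2 (ln PI / 2 + ln 2)) as Hc.
      unfold scal in Hc; simpl in Hc; unfold mult in Hc; simpl in Hc.
      replace (2 - 1) with 1 in Hc by ring. rewrite Rmult_1_l in Hc. exact Hc. }
  pose proof (is_RInt_plus (V:=R_NormedModule) _ _ _ _ _ _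
                (is_RInt_plus (V:=R_NormedModule) _ _ _ _ _ _ Hhalf Hhalf1) Hlin) as Hlhs.
  apply (is_RInt_ext _ (fun x => lnGamma x + (ln PI / 2 + ln 2))) in Hlhs;
    [|intros x Hx; rewrite Rmin_left, Rmax_right in Hx by lra; apply lnGamma_dup; lra].
  pose proof (is_RInt_unique _ _ _ _ Hlhs) as E1. rewrite (is_RInt_unique _ _ _ _ Hrhs) in E1.
  unfold plus in E1; simpl in E1.
  assert (HQ : Raabe (/ 2) = RInt lnGamma (/ 2) 1 + RInt lnGamma 1 (3 / 2)).
  { unfold Raabe. replace (/ 2 + 1) with (3 / 2) by field.
    symmetry. apply (RInt_Chasles (V:=R_CompleteNormedModule)); apply ex_RInt_lnGamma; lra. }
  pose proof (Raabe_affine (/ 2) ltac:(lra)) as F. rewrite ln_Rinv in F by lra.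
  rewrite ln_mult by (pose proof PI_RGT_0; lra). lra.
Qed.

Lemma Raabe_formula x : 0 < x -> Raabe x = ln (2 * PI) / 2 + x * ln x - x.
Proof. intros Hx. rewrite Raabe_affine, Raabe_one by exact Hx. reflexivity. Qed.

(** * ln K in closed form *)

Definition xlnx (t : R) : R := t * ln t.

Lemma xlnx_bound y : 0 < y <= 1 -> Rabs (xlnx y) <= 2 * sqrt y.
Proof.
  intros Hy. unfold xlnx. set (s := sqrt y).
  assert (Hs : 0 < s) by (apply sqrt_lt_R0; lra).
  assert (Hss : s * s = y) by (apply sqrt_sqrt; lra).
  assert (Hs1 : s <= 1) by (unfold s; rewrite <- sqrt_1; apply sqrt_le_1_alt; lra).
  assert (Hl : ln y = 2 * ln s) by (rewrite <- Hss, ln_mult by lra; ring).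
  assert (Hl0 : ln s <= 0) by (rewrite <- ln_1; apply ln_le; lra).
  pose proof (ln_div_1_le 1 s ltac:(lra) Hs) as H. rewrite ln_1 in H.
  assert (Hq : - ln s * s <= 1).
  { apply Rmult_le_reg_r with (/ s); [apply Rinv_0_lt_compat; lra|].
    rewrite Rmult_assoc, Rinv_r, Rmult_1_r, Rmult_1_l by lra. unfold Rdiv in H. lra. }
  rewrite Hl, <- Hss, Rabs_left1 by nra. nra.
Qed.

Lemma xlnx_continuous t : continuous xlnx t.
Proof.
  (* at 0 use |t ln t| <= 2 sqrt t; to the left of 0 the junk value ln t = 0 gives xlnx = 0 *)
  destruct (Rtotal_order t 0) as [Hlt | [-> | Hgt]].
  - apply (filterlim_ext_loc (fun _ => 0)).
    + exists (mkposreal (- t) ltac:(lra)). intros y Hy. ball_bounds Hy.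
      unfold xlnx. rewrite ln_of_nonpos by lra. ring.
    + unfold xlnx. rewrite ln_of_nonpos, Rmult_0_r by lra. apply filterlim_const.
  - apply filterlim_locally. intros eps.
    assert (Hd : 0 < Rmin 1 ((eps / 2) * (eps / 2))) by (apply Rmin_glb_lt; [lra | destruct eps; simpl; nra]).
    exists (mkposreal _ Hd). intros y Hy. apply ball_R_abs. ball_bounds Hy.
    pose proof (Rmin_l 1 ((eps / 2) * (eps / 2))). pose proof (Rmin_r 1 ((eps / 2) * (eps / 2))).
    unfold xlnx at 2. rewrite Rmult_0_l, Rminus_0_r.
    destruct (Rle_lt_dec y 0) as [Hy0 | Hy0].
    + unfold xlnx. rewrite ln_of_nonpos, Rmult_0_r, Rabs_R0 by lra. destruct eps; simpl; lra.
    + eapply Rle_lt_trans; [apply xlnx_bound; lra|].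
      assert (sqrt y < eps / 2).
      { rewrite <- (sqrt_square (eps / 2)) by (destruct eps; simpl; lra). apply sqrt_lt_1_alt. lra. }
      lra.
  - apply ex_derive_continuous_R. unfold xlnx. auto_derive. lra.
Qed.

Lemma xlnx_derive t : 0 < t -> is_derive xlnx t (ln t + 1).
Proof. intros Ht. unfold xlnx. auto_derive; [lra | field; lra]. Qed.

Lemma RInt_ln a b : 0 < a -> 0 < b -> RInt ln a b = (xlnx b - b) - (xlnx a - a).
Proof.
  intros Ha Hb. apply (is_RInt_unique (V:=R_CompleteNormedModule)).
  apply (is_RInt_derive (fun t => xlnx t - t) ln); intros x Hx; pose proof (between_pos a b x Ha Hb Hx).
  - unfold xlnx. auto_derive; [lra | field; lra].
  - apply ex_derive_continuous_R. auto_derive. lra.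
Qed.

Lemma RInt_lnGamma_shift a x : 0 < a -> 0 < x ->
  RInt lnGamma a x = RInt lnGamma (a + 1) (x + 1) - (xlnx x - x) + (xlnx a - a).
Proof.
  intros Ha Hx.
  rewrite (RInt_ext lnGamma (fun t => minus (lnGamma (t + 1)) (ln t))).
  2:{ intros t Ht. assert (0 < t) by (apply (between_pos a x t Ha Hx); lra).
      unfold minus, plus, opp; simpl. rewrite lnGamma_succ by lra. ring. }
  rewrite (RInt_minus (V:=R_CompleteNormedModule)).
  - rewrite RInt_shift by (apply ex_RInt_lnGamma; lra). rewrite RInt_ln by lra.
    unfold minus, plus, opp; simpl. ring.
  - apply ex_RInt_continuous_R. intros z Hz. pose proof (between_pos a x z Ha Hx Hz).
    apply (continuous_comp (fun t => t + 1) lnGamma);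
      [apply ex_derive_continuous_R; auto_derive; auto | apply lnGamma_continuous; lra].
  - apply ex_RInt_continuous_R. intros z Hz. pose proof (between_pos a x z Ha Hx Hz).
    apply ex_derive_continuous_R. auto_derive. lra.
Qed.

Lemma RInt_lnGamma_lower_continuous a x : -1 < a -> 0 < x ->
  continuous (fun y => RInt lnGamma (y + 1) (x + 1)) a.
Proof.
  intros Ha Hx. apply ex_derive_continuous_R. eexists.
  apply (is_derive_comp (fun z => RInt lnGamma z (x + 1)) (fun y => y + 1)); [|auto_derive; auto].
  apply (is_derive_RInt' lnGamma (fun z => RInt lnGamma z (x + 1)) (a + 1) (x + 1));
    [|apply lnGamma_continuous; lra].
  exists (mkposreal ((a + 1) / 2) ltac:(lra)). intros y Hy. ball_bounds Hy.
  apply (RInt_correct (V:=R_CompleteNormedModule)). apply ex_RInt_lnGamma; lra.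
Qed.

Lemma is_RInt_gen_lnGamma_0 x : 0 < x ->
  is_RInt_gen lnGamma (at_right 0) (at_point x) (RInt lnGamma 1 (x + 1) - (xlnx x - x)).
Proof.
  intros Hx.
  assert (Hnear : filter_prod (at_right 0) (at_point x)
                    (fun ab => 0 < fst ab /\ snd ab = x))
    by (apply (Filter_prod _ _ _ (fun a => 0 < a) (fun b => b = x));
        [apply at_right_gt | reflexivity | simpl; auto]).
  apply is_RInt_gen_of_RInt.
  - generalize Hnear. apply filter_imp. intros [a b] [Ha Hb]; simpl in *; subst b. apply ex_RInt_lnGamma; auto.
  - set (Phi := fun a => RInt lnGamma (a + 1) (x + 1) - (xlnx x - x) + (xlnx a - a)).
    apply (filterlim_ext_loc (fun ab => Phi (fst ab))).
    + generalize Hnear. apply filter_imp. intros [a b] [Ha Hb]; simpl in *; subst b. symmetry. apply RInt_lnGamma_shift; auto.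
    + replace (RInt lnGamma 1 (x + 1) - (xlnx x - x)) with (Phi 0)
        by (unfold Phi, xlnx; rewrite Rplus_0_l; ring).
      apply filterlim_prod_fst, continuous_at_right. unfold Phi.
      apply (continuous_plus (fun a => RInt lnGamma (a + 1) (x + 1) - (xlnx x - x)) (fun a => xlnx a - a)).
      * apply (continuous_minus (fun a => RInt lnGamma (a + 1) (x + 1)) (fun _ => xlnx x - x));
          [apply RInt_lnGamma_lower_continuous; lra | apply continuous_const].
      * apply (continuous_minus xlnx (fun a => a)); [apply xlnx_continuous | apply continuous_id].
Qed.

Definition Lambda (x : R) : R :=
  RInt lnGamma 1 (x + 1) - (xlnx x - x) + x * (x - 1) / 2 - x / 2 * ln (2 * PI).

Lemma lnK_Lambda x : 0 < x -> lnK x = Lambda x.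
Proof.
  intros Hx. unfold lnK, Lambda. change (fun t => ln (Gamma t)) with lnGamma.
  rewrite (is_RInt_gen_unique (V:=R_CompleteNormedModule) _ _ (is_RInt_gen_lnGamma_0 x Hx)).
  reflexivity.
Qed.

Lemma RInt_lnGamma_1_derive x : -1 < x -> is_derive (fun y => RInt lnGamma 1 (y + 1)) x (lnGamma (x + 1)).
Proof.
  intros Hx. rewrite <- (Rmult_1_l (lnGamma (x + 1))).
  apply (is_derive_comp (fun z => RInt lnGamma 1 z) (fun y => y + 1));
    [apply RInt_lnGamma_derive; lra | auto_derive; auto; ring].
Qed.

Lemma Lambda_continuous x : -1 < x -> continuous Lambda x.
Proof.
  intros Hx. unfold Lambda.
  apply (continuous_minus (fun y => RInt lnGamma 1 (y + 1) - (xlnx y - y) + y * (y - 1) / 2)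
           (fun y => y / 2 * ln (2 * PI))); [|apply ex_derive_continuous_R; auto_derive; auto].
  apply (continuous_plus (fun y => RInt lnGamma 1 (y + 1) - (xlnx y - y)) (fun y => y * (y - 1) / 2));
    [|apply ex_derive_continuous_R; auto_derive; auto].
  apply (continuous_minus (fun y => RInt lnGamma 1 (y + 1)) (fun y => xlnx y - y)).
  - apply ex_derive_continuous_R. eexists. apply RInt_lnGamma_1_derive, Hx.
  - apply (continuous_minus xlnx (fun y => y)); [apply xlnx_continuous | apply continuous_id].
Qed.

Lemma Lambda_derive x : 0 < x -> is_derive Lambda x (lnGamma x + x - / 2 - ln (2 * PI) / 2).
Proof.
  intros Hx. unfold Lambda.
  replace (lnGamma x + x - / 2 - ln (2 * PI) / 2)
    with (lnGamma (x + 1) - (ln x + 1 - 1) + (2 * x - 1) / 2 - ln (2 * PI) / 2)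
    by (rewrite lnGamma_succ by lra; field).
  apply (is_derive_minus (fun y => RInt lnGamma 1 (y + 1) - (xlnx y - y) + y * (y - 1) / 2)
           (fun y => y / 2 * ln (2 * PI))); [|auto_derive; auto; field].
  apply (is_derive_plus (fun y => RInt lnGamma 1 (y + 1) - (xlnx y - y)) (fun y => y * (y - 1) / 2));
    [|auto_derive; auto; field].
  apply (is_derive_minus (fun y => RInt lnGamma 1 (y + 1)) (fun y => xlnx y - y));
    [apply RInt_lnGamma_1_derive; lra|].
  apply (is_derive_minus xlnx (fun y => y)); [apply xlnx_derive, Hx | auto_derive; auto].
Qed.

Lemma Lambda_succ x : 0 < x -> Lambda (x + 1) = Lambda x + xlnx x.
Proof.
  intros Hx. unfold Lambda.
  pose proof (Raabe_formula (x + 1) ltac:(lra)) as HQ. rewrite Raabe_split in HQ by lra.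
  unfold xlnx. lra.
Qed.

Definition xlnx_primitive (a : R) : R := a * xlnx a / 2 - a * a / 4.

Lemma xlnx_primitive_0 : xlnx_primitive 0 = 0.
Proof. unfold xlnx_primitive, xlnx. field. Qed.

Lemma xlnx_primitive_continuous a : continuous xlnx_primitive a.
Proof.
  unfold xlnx_primitive.
  apply (continuous_minus (fun a => a * xlnx a / 2) (fun a => a * a / 4));
    [|apply ex_derive_continuous_R; auto_derive; auto].
  apply (continuous_mult (fun a => a * xlnx a) (fun _ => / 2)); [|apply continuous_const].
  apply (continuous_mult (fun a => a) xlnx); [apply continuous_id | apply xlnx_continuous].
Qed.

Lemma xlnx_primitive_scale a N : 0 <= a -> 0 < N ->
  N * xlnx_primitive (a / N) = xlnx_primitive a / N - ln N * (a * a) / (2 * N).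
Proof.
  intros Ha HN. destruct (Req_dec a 0) as [-> | Ha0].
  - unfold Rdiv. rewrite Rmult_0_l, xlnx_primitive_0. field. lra.
  - unfold xlnx_primitive, xlnx. unfold Rdiv at 1 2 3 4.
    rewrite ln_mult, ln_Rinv by (try apply Rinv_0_lt_compat; lra). field. lra.
Qed.

Lemma RInt_xlnx a b : 0 <= a <= b -> RInt xlnx a b = xlnx_primitive b - xlnx_primitive a.
Proof.
  intros Hab. apply (RInt_derive_interior xlnx xlnx_primitive a b 1); try lra.
  - intros; apply xlnx_continuous.
  - apply xlnx_primitive_continuous.
  - apply xlnx_primitive_continuous.
  - intros x Hx. unfold xlnx_primitive, xlnx. auto_derive; [lra | field; lra].
Qed.

Lemma ex_RInt_Lambda a b : 0 <= a -> 0 <= b -> ex_RInt Lambda a b.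
Proof.
  intros Ha Hb. apply ex_RInt_continuous_R. intros z Hz. apply Lambda_continuous.
  assert (0 <= Rmin a b) by (apply Rmin_glb; lra). lra.
Qed.

Definition int_Lambda_01 := RInt Lambda 0 1.

Lemma RInt_Lambda_succ a b : 0 <= a <= b ->
  RInt (fun t => Lambda (t + 1)) a b = RInt Lambda a b + (xlnx_primitive b - xlnx_primitive a).
Proof.
  intros Hab.
  rewrite (RInt_ext (fun t => Lambda (t + 1)) (fun t => plus (Lambda t) (xlnx t))).
  2:{ intros t Ht. rewrite Rmin_left, Rmax_right in Ht by lra. apply Lambda_succ. lra. }
  rewrite (RInt_plus (V:=R_CompleteNormedModule)), RInt_xlnx by
    (try apply ex_RInt_Lambda; try apply ex_RInt_continuous_R; intros; try apply xlnx_continuous; lra).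
  reflexivity.
Qed.

Lemma RInt_Lambda_unit k : RInt Lambda (INR k) (INR k + 1) = int_Lambda_01 + xlnx_primitive (INR k).
Proof.
  induction k as [|k IH].
  - simpl. rewrite xlnx_primitive_0, Rplus_0_l, Rplus_0_r. reflexivity.
  - rewrite S_INR. pose proof (pos_INR k).
    rewrite <- (RInt_shift Lambda 1 (INR k) (INR k + 1)) by (apply ex_RInt_Lambda; lra).
    rewrite RInt_Lambda_succ by lra. rewrite IH. lra.
Qed.

Lemma RInt_Lambda_0_INR m :
  RInt Lambda 0 (INR m) = sumR m (fun k => int_Lambda_01 + xlnx_primitive (INR k)).
Proof.
  induction m as [|m IH]; [simpl; rewrite RInt_point; reflexivity|].
  simpl sumR. rewrite <- IH, <- RInt_Lambda_unit, S_INR. pose proof (pos_INR m).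
  symmetry. apply (RInt_Chasles (V:=R_CompleteNormedModule)); apply ex_RInt_Lambda; lra.
Qed.

Lemma RInt_Lambda_shift c : 0 <= c <= 1 ->
  RInt (fun x => Lambda (x + c)) 0 1 = int_Lambda_01 + xlnx_primitive c.
Proof.
  (* split [c, 1 + c] at 1 and move [1, 1 + c] back to [0, c] *)
  intros Hc.
  rewrite RInt_shift, Rplus_0_l by (apply ex_RInt_Lambda; lra).
  rewrite <- (RInt_Chasles (V:=R_CompleteNormedModule) Lambda c 1 (1 + c)) by (apply ex_RInt_Lambda; lra).
  replace (RInt Lambda 1 (1 + c)) with (RInt (fun t => Lambda (t + 1)) 0 c)
    by (rewrite RInt_shift by (apply ex_RInt_Lambda; lra); f_equal; ring).
  rewrite RInt_Lambda_succ by lra.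
  unfold int_Lambda_01. rewrite <- (RInt_Chasles (V:=R_CompleteNormedModule) Lambda 0 c 1)
    by (apply ex_RInt_Lambda; lra).
  rewrite xlnx_primitive_0. unfold plus; simpl. ring.
Qed.

(** * The multiplication formula for K *)

Lemma is_derive_sumR n (f : nat -> R -> R) (df : nat -> R) x :
  (forall j, (j < n)%nat -> is_derive (f j) x (df j)) ->
  is_derive (fun y => sumR n (fun j => f j y)) x (sumR n df).
Proof.
  induction n as [|n IH]; intros H; simpl; [apply (is_derive_const (K:=R_AbsRing) (V:=R_NormedModule) 0)|].
  apply (is_derive_plus (fun y => sumR n (fun j => f j y)) (f n)); [apply IH; intros; apply H | apply H]; lia.
Qed.

Lemma is_RInt_sumR n (f : nat -> R -> R) (v : nat -> R) a b :
  (forall j, (j < n)%nat -> is_RInt (f j) a b (v j)) ->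
  is_RInt (fun x => sumR n (fun j => f j x)) a b (sumR n v).
Proof.
  induction n as [|n IH]; intros H; simpl.
  - pose proof (is_RInt_const (V:=R_NormedModule) a b 0) as H0.
    unfold scal in H0; simpl in H0; unfold mult in H0; simpl in H0. rewrite Rmult_0_r in H0. exact H0.
  - apply (is_RInt_plus (V:=R_NormedModule) (fun x => sumR n (fun j => f j x)) (f n));
      [apply IH; intros; apply H | apply H]; lia.
Qed.

Lemma exp_pow a m : exp a ^ m = exp (INR m * a).
Proof.
  induction m as [|m IH]; [simpl; rewrite Rmult_0_l, exp_0; reflexivity|].
  rewrite S_INR. simpl pow. rewrite IH, <- exp_plus. f_equal. ring.
Qed.

Section KinkelinDefect.
Variable n : nat.
Hypothesis n_pos : (1 <= n)%nat.

Let N := INR n.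

Let N_pos : 0 < N.
Proof. unfold N. apply lt_0_INR. lia. Qed.

Let shift_bounds j : (j < n)%nat -> 0 <= INR j / N <= 1.
Proof.
  intros Hj. split; [apply Rmult_le_pos; [apply pos_INR | left; apply Rinv_0_lt_compat, N_pos]|].
  apply Rmult_le_reg_r with N; [exact N_pos|]. unfold Rdiv.
  rewrite Rmult_assoc, Rinv_l, Rmult_1_r, Rmult_1_l by (pose proof N_pos; lra).
  unfold N. apply le_INR. lia.
Qed.

(* [ln K(nx) - n sum_j ln K(x + j/n) - (nx(nx - 1)/2) ln n], written with [Lambda] *)
Definition kinkelin_defect (x : R) : R :=
  Lambda (INR n * x) - INR n * sumR n (fun j => Lambda (x + INR j / INR n))
  - INR n * x * (INR n * x - 1) / 2 * ln (INR n).

Lemma kinkelin_defect_derive : exists k, forall x, 0 < x -> is_derive kinkelin_defect x k.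
Proof.
  set (c := ln (2 * PI) / 2).
  exists (- N * gauss_mult_const n - N * sumR n (fun j => INR j / N) + (N * N - N) * (/ 2 + c) + N / 2 * ln N).
  intros x Hx. pose proof N_pos. unfold kinkelin_defect. fold N.
  assert (HS : is_derive (fun y => sumR n (fun j => Lambda (y + INR j / N))) x
                 (sumR n (fun j => lnGamma (x + INR j / N) + (x + INR j / N) - / 2 - c))).
  { apply (is_derive_sumR n (fun j y => Lambda (y + INR j / N))). intros j Hj.
    pose proof (shift_bounds j Hj). rewrite <- (Rmult_1_l (_ - c)).
    apply (is_derive_comp Lambda (fun y => y + INR j / N)); [apply Lambda_derive; lra | auto_derive; auto; ring]. }
  match goal with |- is_derive _ x ?k => replace k with
    (N * (lnGamma (N * x) + N * x - / 2 - c)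
     - N * sumR n (fun j => lnGamma (x + INR j / N) + (x + INR j / N) - / 2 - c)
     - (N * (N * x - 1) + N * x * N) / 2 * ln N) end.
  - apply (is_derive_minus (fun y => Lambda (N * y) - N * sumR n (fun j => Lambda (y + INR j / N)))
             (fun y => N * y * (N * y - 1) / 2 * ln N)); [|auto_derive; auto; field].
    apply (is_derive_minus (fun y => Lambda (N * y)) (fun y => N * sumR n (fun j => Lambda (y + INR j / N)))).
    + apply (is_derive_comp Lambda (fun y => N * y)); [apply Lambda_derive; nra | auto_derive; auto; ring].
    + apply (is_derive_scal (fun y => sumR n (fun j => Lambda (y + INR j / N)))), HS.
  - (* Gauss's multiplication formula at N x removes the lnGamma terms *)
    pose proof (lnGamma_mult n n_pos (N * x) ltac:(nra)) as G. fold N in G.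
    rewrite (sumR_ext n _ (fun j => lnGamma (x + INR j / N))) in G by (intros; f_equal; field; lra).
    rewrite (sumR_ext n _ (fun j => lnGamma (x + INR j / N) + (INR j / N + (x - / 2 - c)))) by (intros; ring).
    rewrite !sumR_plus, sumR_const. fold N. nra.
Qed.

Lemma kinkelin_defect_periodic x : 0 < x -> kinkelin_defect (x + 1 / N) = kinkelin_defect x.
Proof.
  intros Hx. pose proof N_pos. unfold kinkelin_defect. fold N.
  replace (N * (x + 1 / N)) with (N * x + 1) by (field; lra).
  rewrite Lambda_succ by nra.
  set (G := fun j => Lambda (x + INR j / N)).
  rewrite (sumR_ext n _ (fun j => G (S j))) by (intros j _; unfold G; rewrite S_INR; f_equal; field; lra).
  rewrite sumR_shift. unfold G. fold N.
  replace (x + N / N) with (x + 1) by (field; lra). replace (x + INR 0 / N) with x by (simpl; field; lra).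
  rewrite Lambda_succ by lra. unfold xlnx. rewrite ln_mult by lra. field.
Qed.

Lemma kinkelin_defect_const x : 0 < x -> kinkelin_defect x = kinkelin_defect 1.
Proof.
  (* an affine function with period 1/N is constant *)
  intros Hx. pose proof N_pos. destruct kinkelin_defect_derive as [k Hk].
  assert (Aff : forall y, 0 < y -> kinkelin_defect y = kinkelin_defect 1 + k * (y - 1)).
  { intros y Hy.
    assert (E : kinkelin_defect y - k * y = kinkelin_defect 1 - k * 1).
    { apply (is_derive_0_eq (fun z => kinkelin_defect z - k * z) 1 y). intros z Hz.
      replace 0 with (k - k * 1) by ring.
      apply (is_derive_minus kinkelin_defect (fun z => k * z));
        [apply Hk, (between_pos 1 y z ltac:(lra) Hy Hz) | auto_derive; auto]. }
    lra. }
  assert (Hk0 : k * (1 / N) = 0).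
  { pose proof (kinkelin_defect_periodic 1 ltac:(lra)) as P.
    rewrite (Aff (1 + 1 / N)) in P by (pose proof (Rdiv_lt_0_compat 1 N ltac:(lra) H); lra). lra. }
  rewrite Aff by exact Hx.
  assert (k = 0) as -> by (apply Rmult_integral in Hk0; destruct Hk0 as [? | Hinv]; [assumption|];
                           pose proof (Rdiv_lt_0_compat 1 N ltac:(lra) H); lra).
  ring.
Qed.

Lemma is_RInt_kinkelin_defect : is_RInt kinkelin_defect 0 1
  (/ N * sumR n (fun k => int_Lambda_01 + xlnx_primitive (INR k))
   - N * sumR n (fun j => int_Lambda_01 + xlnx_primitive (INR j / N))
   - (N * N / 6 - N / 4) * ln N).
Proof.
  pose proof N_pos.
  assert (HA : is_RInt (fun x => Lambda (N * x)) 0 1 (/ N * sumR n (fun k => int_Lambda_01 + xlnx_primitive (INR k)))).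
  { rewrite <- RInt_Lambda_0_INR. fold N.
    apply (is_RInt_ext (fun x => Lambda (N * x + 0))); [intros; rewrite Rplus_0_r; reflexivity|].
    replace (RInt Lambda 0 N) with (RInt Lambda (N * 0 + 0) (N * 1 + 0)) by (f_equal; ring).
    apply is_RInt_affine; [lra | apply ex_RInt_Lambda; nra]. }
  assert (HS : is_RInt (fun x => sumR n (fun j => Lambda (x + INR j / N))) 0 1
                 (sumR n (fun j => int_Lambda_01 + xlnx_primitive (INR j / N)))).
  { apply (is_RInt_sumR n (fun j x => Lambda (x + INR j / N))). intros j Hj.
    rewrite <- RInt_Lambda_shift by (apply shift_bounds, Hj).
    apply (RInt_correct (V:=R_CompleteNormedModule)), ex_RInt_continuous_R.
    intros z Hz. rewrite Rmin_left, Rmax_right in Hz by lra. pose proof (shift_bounds j Hj).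
    apply (continuous_comp (fun x => x + INR j / N) Lambda);
      [apply ex_derive_continuous_R; auto_derive; auto | apply Lambda_continuous; lra]. }
  assert (HQ : is_RInt (fun x => N * x * (N * x - 1) / 2 * ln N) 0 1 ((N * N / 6 - N / 4) * ln N)).
  { replace ((N * N / 6 - N / 4) * ln N)
      with (minus ((N * N * 1 * 1 * 1 / 6 - N * 1 * 1 / 4) * ln N) ((N * N * 0 * 0 * 0 / 6 - N * 0 * 0 / 4) * ln N))
      by (unfold minus, plus, opp; simpl; field).
    apply (is_RInt_derive (fun x => (N * N * x * x * x / 6 - N * x * x / 4) * ln N)); intros x _;
      [auto_derive; auto; field | apply ex_derive_continuous_R; auto_derive; auto]. }
  pose proof (is_RInt_minus (V:=R_NormedModule) _ _ _ _ _ _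
               (is_RInt_minus (V:=R_NormedModule) _ _ _ _ _ _ HA
                  (is_RInt_scal (V:=R_NormedModule) _ _ _ N _ HS)) HQ) as Hdef.
  unfold minus, plus, opp, scal in Hdef; simpl in Hdef; unfold mult in Hdef; simpl in Hdef.
  exact Hdef.
Qed.

Lemma kinkelin_defect_value : kinkelin_defect 1 = (1 - N * N) * int_Lambda_01 + ln N / 12.
Proof.
  pose proof N_pos.
  assert (E1 : RInt kinkelin_defect 0 1 = kinkelin_defect 1).
  { rewrite (RInt_ext kinkelin_defect (fun _ => kinkelin_defect 1)).
    - rewrite RInt_const. unfold scal; simpl; unfold mult; simpl. ring.
    - intros x Hx. rewrite Rmin_left, Rmax_right in Hx by lra. apply kinkelin_defect_const. lra. }
  rewrite <- E1, (is_RInt_unique _ _ _ _ is_RInt_kinkelin_defect).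
  rewrite !sumR_plus, !sumR_const. fold N.
  rewrite (sumR_ext n (fun j => xlnx_primitive (INR j / N))
             (fun j => / N * (/ N * xlnx_primitive (INR j)) + (- (ln N / (2 * N * N))) * (INR j * INR j)))
    by (intros j _; apply Rmult_eq_reg_l with N; [rewrite xlnx_primitive_scale by (try apply pos_INR; lra); field; lra | lra]).
  rewrite sumR_plus, !sumR_scal, sumR_squares. fold N. field. lra.
Qed.

End KinkelinDefect.

Theorem mainTheorem16 (n : nat) (x : R) :
  (1 <= n)%nat -> 0 < x ->
  K (INR n * x) =
    Rpower (INR n) (/2 * (INR n * x) * (INR n * x - 1) + /12)
    * Rpower omega_t (- (/2 * (INR n ^ 2 - 1)))
    * prodR n (fun j => K (x + INR j / INR n) ^ n).
Proof.
  intros Hn Hx. set (N := INR n).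
  assert (HN : 0 < N) by (unfold N; apply lt_0_INR; lia).
  assert (Hdefect : kinkelin_defect n x = (1 - N * N) * int_Lambda_01 + ln N / 12)
    by (rewrite kinkelin_defect_const by assumption; apply kinkelin_defect_value, Hn).
  assert (Homega : ln omega_t = 2 * int_Lambda_01).
  { unfold omega_t. rewrite ln_exp. f_equal. apply RInt_ext.
    intros t Ht. rewrite Rmin_left, Rmax_right in Ht by lra. apply lnK_Lambda. lra. }
  assert (Hprod : prodR n (fun j => K (x + INR j / N) ^ n)
                  = exp (N * sumR n (fun j => Lambda (x + INR j / N)))).
  { rewrite <- sumR_scal, <- prodR_exp. apply prodR_ext. intros j _.
    unfold K. rewrite exp_pow, lnK_Lambda; [reflexivity|].
    pose proof (pos_INR j). assert (0 <= INR j / N) by (apply Rmult_le_pos; [lra | left; apply Rinv_0_lt_compat; lra]).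
    lra. }
  fold N. rewrite Hprod. unfold Rpower. rewrite Homega.
  unfold K. rewrite lnK_Lambda by nra.
  rewrite <- !exp_plus. f_equal.
  unfold kinkelin_defect in Hdefect. fold N in Hdefect. simpl pow. nra.
Qed.
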